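(* The product-preserving full embedding $G:\mathbf{cMet}_1\to{\rm PER}(\mathbf U)$ extends to an embedding of hyperdoctrines $(G,\eta):\mathbf{CMT}\to\mathrm{Sub}_{{\rm PER}(\mathbf U)}$, where $\eta_{(X,d)}$ sends a uniformly continuous $\phi:(X,d)\to[0,1]$ to the subobject of $(X,d)$ corresponding to $\phi$ viewed as a strict relation (i.e. the mono $(X,\sim_\phi)\to(X,d)$ with $x\sim_\phi x'=\max(\phi(x),d(x,x'))$). This embedding preserves all the structure of a universally coherent hyperdoctrine: the fibrewise finite meets and joins, the left adjoints $\exists$ and the right adjoints $\forall$ along projections of $\mathbf{cMet}_1$ (which exist for the image projections in $\mathrm{Sub}_{{\rm PER}(\mathbf U)}$), and equality; and each $\eta_{(X,d)}$ reflects the order.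
   Context: $\mathbf{cMet}_1$: complete metric spaces with all distances $\le 1$ and uniformly continuous maps. For $\alpha,\beta:Z\to[0,1]$, $\alpha\sqsubseteq\beta$ means: for every $\varepsilon>0$ there is $\delta>0$ with $\alpha(z)\le\delta\Rightarrow\beta(z)\le\varepsilon$ for all $z$. $\mathbf U$: the hyperdoctrine on $\mathbf{Sets}$ with $\mathbf U(X)$ all functions $X\to[0,1]$ under $\sqsubseteq$ (meet $=\max$, join $=\min$, top $=0$, $\exists=\inf$, $\forall=\sup$ over fibres), reindexing by precomposition. $\mathbf{CMT}$: the hyperdoctrine on $\mathbf{cMet}_1$ with $\mathbf{CMT}(X,d)$ the uniformly continuous maps $(X,d)\to[0,1]$ under $\sqsubseteq$, reindexing by precomposition. ${\rm PER}(\mathbf U)$, concretely: objects $(X,R)$, $R:X\times X\to[0,1]$ with $R(x,y)\sqsubseteq R(y,x)$ and $\max(R(x,y),R(y,z))\sqsubseteq R(x,z)$; morphisms are classes $[F]$ of $F:X\times Y\to[0,1]$ with $F(x,y)\sqsubseteq\max(R(x,x),S(y,y))$, $\max(F(x,y),R(x,x'),S(y,y'))\sqsubseteq F(x',y')$, $\max(F(x,y),F(x,y'))\sqsubseteq S(y,y')$, $R(x,x)\sqsubseteq\inf_yF(x,y)$, where $F\sim F'$ iff $F\sqsubseteq F'$, composed by $[(x,z)\mapsto\inf_y\max(F(x,y),H(y,z))]$. $G(X,d)=(X,d)$, $G(f)=[(x,y)\mapsto d(f(x),y)]$. A strict relation on $(X,R)$ is $\phi:X\to[0,1]$ with $\phi(x)\sqsubseteq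 R(x,x)$ and $\max(\phi(x),R(x,x'))\sqsubseteq\phi(x')$. $\mathrm{Sub}_{{\rm PER}(\mathbf U)}$ sends an object to its poset of subobjects, with reindexing by pullback. A morphism of hyperdoctrines $(F,\eta):\mathbf P\to\mathbf Q$ consists of a finite-product-preserving functor $F$ between the bases and a pseudonatural transformation $\eta:\mathbf P\to\mathbf Q\circ F^{op}$; it is an embedding if $F$ is full and faithful and every $\eta_X$ reflects the order. *)

From Stdlib Require Import Reals ClassicalEpsilon.
Open Scope R_scope.

Definition sq {Z : Type} (a b : Z -> R) : Prop :=
  forall eps, 0 < eps ->
    exists delta, 0 < delta /\ forall z, a z <= delta -> b z <= eps.

Definition val01 {Z : Type} (a : Z -> R) : Prop := forall z, 0 <= a z <= 1.

(* infimum / supremum in [0,1] of a family (empty family: 1 resp. 0) *)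
Definition is_inf01 {I : Type} (f : I -> R) (r : R) : Prop :=
  (r <= 1 /\ forall i, r <= f i) /\
  (forall b, b <= 1 -> (forall i, b <= f i) -> b <= r).
Definition inf01 {I : Type} (f : I -> R) : R := epsilon (inhabits 0) (is_inf01 f).

Definition is_sup01 {I : Type} (f : I -> R) (r : R) : Prop :=
  (0 <= r /\ forall i, f i <= r) /\
  (forall b, 0 <= b -> (forall i, f i <= b) -> r <= b).
Definition sup01 {I : Type} (f : I -> R) : R := epsilon (inhabits 0) (is_sup01 f).

Definition is_met1 {X : Type} (d : X -> X -> R) : Prop :=
  (forall x y, 0 <= d x y <= 1) /\
  (forall x y, d x y = 0 <-> x = y) /\
  (forall x y, d x y = d y x) /\
  (forall x y z, d x z <= d x y + d y z).

Definition complete {X : Type} (d : X -> X -> R) : Prop :=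
  forall u : nat -> X,
    (forall eps, 0 < eps -> exists N, forall n m, (N <= n)%nat -> (N <= m)%nat ->
        d (u n) (u m) < eps) ->
    exists l, forall eps, 0 < eps -> exists N, forall n, (N <= n)%nat -> d (u n) l < eps.

Definition is_cmet1 {X : Type} (d : X -> X -> R) : Prop := is_met1 d /\ complete d.

Definition unif_cont {X Y : Type} (dX : X -> X -> R) (dY : Y -> Y -> R) (f : X -> Y) : Prop :=
  forall eps, 0 < eps -> exists delta, 0 < delta /\
    forall x x', dX x x' < delta -> dY (f x) (f x') < eps.

Definition dprod {X Y : Type} (dX : X -> X -> R) (dY : Y -> Y -> R)
  (p q : X * Y) : R := Rmax (dX (fst p) (fst q)) (dY (snd p) (snd q)).
Definition dunit (_ _ : unit) : R := 0.

Definition CMT {X : Type} (d : X -> X -> R) (phi : X -> R) : Prop :=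
  val01 phi /\
  forall eps, 0 < eps -> exists delta, 0 < delta /\
    forall x x', d x x' < delta -> Rabs (phi x - phi x') < eps.

Definition is_per {X : Type} (Rl : X -> X -> R) : Prop :=
  val01 (fun p : X * X => Rl (fst p) (snd p)) /\
  sq (fun p : X * X => Rl (fst p) (snd p)) (fun p => Rl (snd p) (fst p)) /\
  sq (fun t : X * X * X => let '(x, y, z) := t in Rmax (Rl x y) (Rl y z))
     (fun t : X * X * X => let '(x, _, z) := t in Rl x z).

Definition is_permor {X Y : Type} (RX : X -> X -> R) (RY : Y -> Y -> R)
  (F : X -> Y -> R) : Prop :=
  val01 (fun p : X * Y => F (fst p) (snd p)) /\
  sq (fun p : X * Y => F (fst p) (snd p))
     (fun p : X * Y => Rmax (RX (fst p) (fst p)) (RY (snd p) (snd p))) /\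
  sq (fun t : X * Y * X * Y => let '(x, y, x', y') := t in
        Rmax (Rmax (F x y) (RX x x')) (RY y y'))
     (fun t : X * Y * X * Y => let '(_, _, x', y') := t in F x' y') /\
  sq (fun t : X * Y * Y => let '(x, y, y') := t in Rmax (F x y) (F x y'))
     (fun t : X * Y * Y => let '(_, y, y') := t in RY y y') /\
  sq (fun x : X => RX x x) (fun x : X => inf01 (fun y : Y => F x y)).

Definition pereq {X Y : Type} (F F' : X -> Y -> R) : Prop :=
  sq (fun p : X * Y => F (fst p) (snd p)) (fun p : X * Y => F' (fst p) (snd p)).

Definition pcomp {X Y Z : Type} (F : X -> Y -> R) (H : Y -> Z -> R) : X -> Z -> R :=
  fun x z => inf01 (fun y : Y => Rmax (F x y) (H y z)).

Definition per_mono {B A : Type} (RB : B -> B -> R) (RA : A -> A -> R)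
  (m : B -> A -> R) : Prop :=
  is_permor RB RA m /\
  forall (C : Type) (RC : C -> C -> R) (f g : C -> B -> R),
    is_per RC -> is_permor RC RB f -> is_permor RC RB g ->
    pereq (pcomp f m) (pcomp g m) -> pereq f g.

Definition is_per_terminal {T : Type} (RT : T -> T -> R) : Prop :=
  is_per RT /\
  forall (C : Type) (RC : C -> C -> R), is_per RC ->
    (exists h : C -> T -> R, is_permor RC RT h) /\
    (forall h h' : C -> T -> R, is_permor RC RT h -> is_permor RC RT h' -> pereq h h').

Definition is_per_product {P A B : Type} (RP : P -> P -> R) (RA : A -> A -> R)
  (RB : B -> B -> R) (p1 : P -> A -> R) (p2 : P -> B -> R) : Prop :=
  is_per RP /\ is_permor RP RA p1 /\ is_permor RP RB p2 /\
  forall (C : Type) (RC : C -> C -> R) (f : C -> A -> R) (g : C -> B -> R),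
    is_per RC -> is_permor RC RA f -> is_permor RC RB g ->
    (exists h : C -> P -> R, is_permor RC RP h /\
        pereq (pcomp h p1) f /\ pereq (pcomp h p2) g) /\
    (forall h h' : C -> P -> R, is_permor RC RP h -> is_permor RC RP h' ->
        pereq (pcomp h p1) (pcomp h' p1) -> pereq (pcomp h p2) (pcomp h' p2) ->
        pereq h h').

(* Sub_{PER(U)}: (representatives of) subobjects of an object (A,RA)   *)
Record subrep (A : Type) : Type := Subrep {
  sdom : Type;
  srel : sdom -> sdom -> R;
  smor : sdom -> A -> R }.
Arguments Subrep {A}.
Arguments sdom {A}.
Arguments srel {A}.
Arguments smor {A}.

Definition is_subobj {A : Type} (RA : A -> A -> R) (S : subrep A) : Prop :=
  is_per (srel S) /\ per_mono (srel S) RA (smor S).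

Definition sub_le {A : Type} (S T : subrep A) : Prop :=
  exists k : sdom S -> sdom T -> R,
    is_permor (srel S) (srel T) k /\ pereq (pcomp k (smor T)) (smor S).

(* (P, smor P, q) is a pullback of the mono smor S along g : (D,RD) -> (A,RA);
   smor P represents the reindexed subobject g^*(S) *)
Definition is_pullback {A D : Type} (RD : D -> D -> R) (g : D -> A -> R)
  (S : subrep A) (P : subrep D) (q : sdom P -> sdom S -> R) : Prop :=
  is_per (srel P) /\ is_permor (srel P) RD (smor P) /\ is_permor (srel P) (srel S) q /\
  pereq (pcomp (smor P) g) (pcomp q (smor S)) /\
  forall (C : Type) (RC : C -> C -> R) (u : C -> D -> R) (v : C -> sdom S -> R),
    is_per RC -> is_permor RC RD u -> is_permor RC (srel S) v ->
    pereq (pcomp u g) (pcomp v (smor S)) ->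
    (exists h : C -> sdom P -> R, is_permor RC (srel P) h /\
        pereq (pcomp h (smor P)) u /\ pereq (pcomp h q) v) /\
    (forall h h' : C -> sdom P -> R, is_permor RC (srel P) h -> is_permor RC (srel P) h' ->
        pereq (pcomp h (smor P)) (pcomp h' (smor P)) -> pereq (pcomp h q) (pcomp h' q) ->
        pereq h h').

(* G(X,d) = (X,d);  G(f) = [(x,y) |-> d(f x, y)] *)
Definition Gmor {X Y : Type} (dY : Y -> Y -> R) (f : X -> Y) : X -> Y -> R :=
  fun x y => dY (f x) y.

Definition simr {X : Type} (d : X -> X -> R) (phi : X -> R) : X -> X -> R :=
  fun x x' => Rmax (phi x) (d x x').

Definition eta {X : Type} (d : X -> X -> R) (phi : X -> R) : subrep X :=
  Subrep X (simr d phi) (simr d phi).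

Definition diag_sub {X : Type} (d : X -> X -> R) : subrep (X * X) :=
  Subrep X d (Gmor (dprod d d) (fun x => (x, x))).

(* Everything rests on the sequential reading of the order of U (sq_seq):
   a ⊑ b iff b vanishes along every sequence along which a vanishes.  The
   axioms of PERs, PER-morphisms and metrics thereby become rules about
   "null" sequences (per_intro, permor_intro and the mor_* elimination rules),
   and composition becomes "there is an intermediate null sequence".

   The central notion is the support of a subobject S
   of G(X), support S x = inf_s m_S(s,x).  Monos being injective
   (per_mono_injective), eta(th) <= S iff th ⊑ support S (eta_below_iff) and
   S <= eta(th) iff support S ⊑ th (eta_above_iff); and pulling back along
   G(f) precomposes supports with f (support_pullback).  Hence order
   reflection, pseudonaturality, the lattice operations, the quantifiers
   (fibrewise inf and sup, adjoint to reindexing along projections) and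
   equality all reduce to inequalities between functions into [0,1]; the
   main theorem collects these facts. *)

From Stdlib Require Import Reals Lra Lia Classical ClassicalEpsilon FunctionalExtensionality.
Open Scope R_scope.

Definition null (u : nat -> R) : Prop :=
  forall eps, 0 < eps -> exists N, forall n, (N <= n)%nat -> u n <= eps.

Lemma null_le (u v : nat -> R) : (forall n, u n <= v n) -> null v -> null u.
Proof.
  intros H Hv e He; destruct (Hv e He) as [N HN]; exists N; intros n Hn.
  specialize (HN n Hn); specialize (H n); lra.
Qed.

Lemma null_eventually_le (u v : nat -> R) :
  (exists M, forall n, (M <= n)%nat -> u n <= v n) -> null v -> null u.
Proof.
  intros [M H] Hv e He; destruct (Hv e He) as [N HN]; exists (max M N); intros n Hn.
  assert (H1 := HN n ltac:(lia)); assert (H2 := H n ltac:(lia)); lra.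
Qed.

Lemma null_max (u v : nat -> R) : null u -> null v -> null (fun n => Rmax (u n) (v n)).
Proof.
  intros Hu Hv e He; destruct (Hu e He) as [N1 H1]; destruct (Hv e He) as [N2 H2].
  exists (max N1 N2); intros n Hn; apply Rmax_lub; [apply H1|apply H2]; lia.
Qed.

Lemma null_max_l (u v : nat -> R) : null (fun n => Rmax (u n) (v n)) -> null u.
Proof. apply null_le; intros; apply Rmax_l. Qed.

Lemma null_max_r (u v : nat -> R) : null (fun n => Rmax (u n) (v n)) -> null v.
Proof. apply null_le; intros; apply Rmax_r. Qed.

Lemma null_plus (u v : nat -> R) : null u -> null v -> null (fun n => u n + v n).
Proof.
  intros Hu Hv e He; destruct (Hu (e/2) ltac:(lra)) as [N1 H1];
    destruct (Hv (e/2) ltac:(lra)) as [N2 H2].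
  exists (max N1 N2); intros n Hn.
  assert (A1 := H1 n ltac:(lia)); assert (A2 := H2 n ltac:(lia)); lra.
Qed.

Lemma null_nonpos (u : nat -> R) : (forall n, u n <= 0) -> null u.
Proof. intros H e He; exists 0%nat; intros n _; specialize (H n); lra. Qed.

Lemma not_null_one : ~ null (fun _ => 1).
Proof. intros H; destruct (H (1/2) ltac:(lra)) as [N HN]; specialize (HN N (le_n _)); lra. Qed.

Lemma null_inv_succ : null (fun n => / (INR n + 1)).
Proof.
  intros e He. destruct (archimed_cor1 e He) as [N [HN HN0]]. exists N. intros n Hn.
  assert (INR N <= INR n) by (apply le_INR; lia).
  assert (0 < INR N) by (apply lt_0_INR; lia).
  assert (/ (INR n + 1) <= / INR N) by (apply Rinv_le_contravar; lra). lra.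
Qed.

(* The converse direction picks, by
   countable choice, points where a <= 1/(n+1) but b stays above eps. *)
Lemma sq_seq {Z : Type} (a b : Z -> R) :
  sq a b <-> forall z : nat -> Z, null (fun n => a (z n)) -> null (fun n => b (z n)).
Proof.
  split.
  - intros H z Hz e He. destruct (H e He) as [d [Hd Hab]].
    destruct (Hz d Hd) as [N HN]. exists N; intros n Hn; apply Hab, HN, Hn.
  - intros H e He. apply NNPP; intro Hn.
    assert (Hx : forall n : nat, exists z, a z <= / (INR n + 1) /\ e < b z).
    { intro n. apply NNPP; intro Hc. apply Hn. exists (/ (INR n + 1)). split.
      - apply Rinv_0_lt_compat. assert (0 <= INR n) by apply pos_INR. lra.
      - intros z Hz. apply Rnot_lt_le. intro Hb. apply Hc. exists z; auto. }
    destruct (choice _ Hx) as [z Hz].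
    assert (Hb : null (fun n => b (z n))).
    { apply H. apply (null_le _ (fun n => / (INR n + 1))); [intro n; apply Hz|apply null_inv_succ]. }
    destruct (Hb e He) as [N HN]. specialize (HN N (le_n _)). specialize (Hz N). lra.
Qed.

Lemma sq_apply {Z : Type} (a b : Z -> R) (z : nat -> Z) :
  sq a b -> null (fun n => a (z n)) -> null (fun n => b (z n)).
Proof. intros H; apply sq_seq; auto. Qed.

Lemma seq_pair_eta {A B : Type} (z : nat -> A * B) : z = fun n => (fst (z n), snd (z n)).
Proof. apply functional_extensionality; intro n; destruct (z n); reflexivity. Qed.

Lemma sq_seq2 {A B : Type} (a b : A * B -> R) :
  (forall (x : nat -> A) (y : nat -> B),
     null (fun n => a (x n, y n)) -> null (fun n => b (x n, y n))) -> sq a b.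
Proof.
  intro H. apply sq_seq. intros z. rewrite (seq_pair_eta z). apply H.
Qed.

Lemma sq_seq3 {A B C : Type} (a b : A * B * C -> R) :
  (forall (x : nat -> A) (y : nat -> B) (w : nat -> C),
     null (fun n => a (x n, y n, w n)) -> null (fun n => b (x n, y n, w n))) -> sq a b.
Proof.
  intro H. apply sq_seq2. intros xy w. rewrite (seq_pair_eta xy). apply H.
Qed.

Lemma sq_seq4 {A B C D : Type} (a b : A * B * C * D -> R) :
  (forall (x : nat -> A) (y : nat -> B) (w : nat -> C) (v : nat -> D),
     null (fun n => a (x n, y n, w n, v n)) -> null (fun n => b (x n, y n, w n, v n))) ->
  sq a b.
Proof.
  intro H. apply sq_seq3. intros xy w v. rewrite (seq_pair_eta xy). apply H.
Qed.

Lemma sq_trans {Z : Type} (a b c : Z -> R) : sq a b -> sq b c -> sq a c.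
Proof. intros H1 H2; apply sq_seq; intros z Hz; apply (sq_apply _ _ z H2), (sq_apply _ _ z H1), Hz. Qed.

Lemma sq_pointwise {Z : Type} (a b : Z -> R) : (forall z, b z <= a z) -> sq a b.
Proof. intro H; apply sq_seq; intros z Hz; apply (null_le _ _ (fun n => H (z n))); auto. Qed.

Lemma sq_max {Z : Type} (a b c : Z -> R) : sq c a -> sq c b -> sq c (fun z => Rmax (a z) (b z)).
Proof.
  intros H1 H2; apply sq_seq; intros z Hz.
  apply null_max; [exact (sq_apply _ _ _ H1 Hz)|exact (sq_apply _ _ _ H2 Hz)].
Qed.

(* For the join we argue with eps-delta directly: min(a,b) <= delta forces
   a <= delta or b <= delta. *)
Lemma sq_min {Z : Type} (a b c : Z -> R) : sq a c -> sq b c -> sq (fun z => Rmin (a z) (b z)) c.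
Proof.
  intros H1 H2 e He. destruct (H1 e He) as [d1 [Hd1 K1]]. destruct (H2 e He) as [d2 [Hd2 K2]].
  exists (Rmin d1 d2); split; [apply Rmin_pos; auto|]. intros z Hz.
  destruct (Rle_dec (a z) (b z)) as [h|h].
  - rewrite Rmin_left in Hz by auto. apply K1. eapply Rle_trans; [exact Hz|apply Rmin_l].
  - rewrite Rmin_right in Hz by lra. apply K2. eapply Rle_trans; [exact Hz|apply Rmin_r].
Qed.

Lemma inf01_spec {I : Type} (f : I -> R) : (forall i, 0 <= f i) -> is_inf01 f (inf01 f).
Proof.
  intro H0. unfold inf01. apply epsilon_spec.
  destruct (classic (exists i : I, f i < 1)) as [[i0 Hi0]|Hno].
  - set (E := fun r => exists i, r = f i).
    assert (bnd : bound (fun r => E (- r))).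
    { exists 0. intros r [i Hi]. assert (H := H0 i). lra. }
    assert (ne : exists r, E (- r)) by (exists (- f i0); exists i0; lra).
    destruct (completeness _ bnd ne) as [m [Hm1 Hm2]].
    exists (- m). split; [split|].
    + assert (- f i0 <= m) by (apply Hm1; exists i0; lra). lra.
    + intro i. assert (- f i <= m) by (apply Hm1; exists i; lra). lra.
    + intros b Hb Hbi. assert (m <= - b). { apply Hm2. intros r [i Hi]. specialize (Hbi i). lra. } lra.
  - exists 1. split; [split|].
    + lra.
    + intro i. apply Rnot_lt_le. intro Hl. apply Hno; eauto.
    + intros b Hb _; exact Hb.
Qed.

Section Infimum.
Context {I : Type} (f : I -> R) (Hf : forall i, 0 <= f i).

Lemma inf01_le i : inf01 f <= f i.
Proof. apply (inf01_spec f Hf). Qed.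
Lemma inf01_le1 : inf01 f <= 1.
Proof. apply (inf01_spec f Hf). Qed.
Lemma inf01_glb b : b <= 1 -> (forall i, b <= f i) -> b <= inf01 f.
Proof. apply (inf01_spec f Hf). Qed.
Lemma inf01_ge0 : 0 <= inf01 f.
Proof. apply inf01_glb; [lra|auto]. Qed.

Lemma inf01_lt c : inf01 f < c -> inf01 f < 1 -> exists i, f i < c.
Proof.
  intros Hc H1. apply NNPP; intro Hn.
  assert (Rmin c 1 <= inf01 f).
  { apply inf01_glb; [apply Rmin_r|]. intro i.
    apply Rnot_lt_le; intro; apply Hn; exists i. eapply Rlt_le_trans; [eassumption|apply Rmin_l]. }
  unfold Rmin in *; destruct (Rle_dec c 1); lra.
Qed.
End Infimum.

Lemma inf01_close {I : Type} (f g : I -> R) e :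
  (forall i, 0 <= f i) -> (forall i, 0 <= g i) -> 0 <= e ->
  (forall i, f i <= g i + e) -> inf01 f <= inf01 g + e.
Proof.
  intros Hf Hg He H. cut (inf01 f - e <= inf01 g); [lra|].
  apply inf01_glb; auto.
  - assert (inf01 f <= 1) by (apply inf01_le1; auto). lra.
  - intro i. assert (inf01 f <= f i) by (apply inf01_le; auto). specialize (H i). lra.
Qed.

Lemma null_inf_elim {I : Type} (F : nat -> I -> R) :
  (forall n i, 0 <= F n i) -> null (fun n => inf01 (F n)) ->
  exists y : nat -> I, null (fun n => F n (y n)).
Proof.
  intros H0 Hn.
  destruct (Hn (1/2) ltac:(lra)) as [N HN].
  assert (HN1 : inf01 (F N) < 1) by (specialize (HN N (le_n _)); lra).
  destruct (inf01_lt (F N) (H0 N) 1 HN1 HN1) as [i0 _].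
  assert (Hx : forall n, exists i, inf01 (F n) < 1 -> F n i < inf01 (F n) + / (INR n + 1)).
  { intro n. destruct (classic (inf01 (F n) < 1)) as [h|h].
    - assert (0 < / (INR n + 1)) by (apply Rinv_0_lt_compat; assert (0 <= INR n) by apply pos_INR; lra).
      assert (Hlt : inf01 (F n) < inf01 (F n) + / (INR n + 1)) by lra.
      destruct (inf01_lt (F n) (H0 n) _ Hlt h) as [i Hi]. exists i; auto.
    - exists i0; intro; contradiction. }
  destruct (choice _ Hx) as [y Hy]. exists y.
  apply (null_eventually_le _ (fun n => inf01 (F n) + / (INR n + 1))).
  - exists N. intros n Hn'. specialize (HN n Hn'). left; apply Hy; lra.
  - apply null_plus; [exact Hn|apply null_inv_succ].
Qed.

Lemma null_inf_intro {I : Type} (F : nat -> I -> R) (y : nat -> I) :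
  (forall n i, 0 <= F n i) -> null (fun n => F n (y n)) -> null (fun n => inf01 (F n)).
Proof. intros H0; apply null_le; intro n; apply inf01_le; auto. Qed.

Lemma sup01_spec {I : Type} (f : I -> R) : (forall i, f i <= 1) -> is_sup01 f (sup01 f).
Proof.
  intro H1. unfold sup01. apply epsilon_spec.
  destruct (classic (exists i : I, 0 < f i)) as [[i0 Hi0]|Hno].
  - set (E := fun r => exists i, r = f i).
    assert (bnd : bound E). { exists 1. intros r [i Hi]. subst; auto. }
    assert (ne : exists r, E r) by (exists (f i0); exists i0; lra).
    destruct (completeness _ bnd ne) as [m [Hm1 Hm2]].
    exists m. split; [split|].
    + assert (f i0 <= m) by (apply Hm1; exists i0; lra). lra.
    + intro i. apply Hm1; exists i; lra.
    + intros b Hb Hbi. apply Hm2. intros r [i Hi]. subst; auto.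
  - exists 0. split; [split|].
    + lra.
    + intro i. apply Rnot_lt_le. intro Hl. apply Hno; eauto.
    + intros b Hb _; exact Hb.
Qed.

Section Supremum.
Context {I : Type} (f : I -> R) (Hf : forall i, f i <= 1).

Lemma sup01_ge i : f i <= sup01 f.
Proof. apply (sup01_spec f Hf). Qed.
Lemma sup01_ge0 : 0 <= sup01 f.
Proof. apply (sup01_spec f Hf). Qed.
Lemma sup01_lub b : 0 <= b -> (forall i, f i <= b) -> sup01 f <= b.
Proof. apply (sup01_spec f Hf). Qed.
Lemma sup01_le1 : sup01 f <= 1.
Proof. apply sup01_lub; auto; lra. Qed.
End Supremum.

Lemma sup01_close {I : Type} (f g : I -> R) e :
  (forall i, f i <= 1) -> (forall i, g i <= 1) -> 0 <= e ->
  (forall i, f i <= g i + e) -> sup01 f <= sup01 g + e.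
Proof.
  intros Hf Hg He H. apply sup01_lub; auto.
  - assert (0 <= sup01 g) by (apply sup01_ge0; auto). lra.
  - intro i. assert (g i <= sup01 g) by (apply sup01_ge; auto). specialize (H i). lra.
Qed.

Lemma Rmax_nonneg a b : 0 <= a -> 0 <= Rmax a b.
Proof. intro; eapply Rle_trans; [|apply Rmax_l]; auto. Qed.

Lemma Rmax_in01 a b : 0 <= a <= 1 -> 0 <= b <= 1 -> 0 <= Rmax a b <= 1.
Proof. intros; split; [apply Rmax_nonneg; lra|apply Rmax_lub; lra]. Qed.

Section Metric.
Context {X : Type} {d : X -> X -> R} (Hd : is_met1 d).

Lemma met_val x y : 0 <= d x y <= 1. Proof. apply Hd. Qed.
Lemma met_refl x : d x x = 0. Proof. apply Hd; reflexivity. Qed.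
Lemma met_sym x y : d x y = d y x. Proof. apply Hd. Qed.
Lemma met_tri x y z : d x z <= d x y + d y z. Proof. apply Hd. Qed.
Lemma met_eq x y : d x y = 0 -> x = y. Proof. apply Hd. Qed.

Lemma null_met_refl (x : nat -> X) : null (fun n => d (x n) (x n)).
Proof. apply null_nonpos; intro n; rewrite met_refl; lra. Qed.

Lemma null_met_sym (x y : nat -> X) :
  null (fun n => d (x n) (y n)) -> null (fun n => d (y n) (x n)).
Proof. apply null_le; intro n; rewrite met_sym; lra. Qed.

Lemma null_met_trans (x y z : nat -> X) :
  null (fun n => d (x n) (y n)) -> null (fun n => d (y n) (z n)) -> null (fun n => d (x n) (z n)).
Proof. intros H1 H2; apply (null_le _ _ (fun n => met_tri (x n) (y n) (z n))); apply null_plus; auto. Qed.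
End Metric.


Lemma per_intro {X : Type} (Rl : X -> X -> R) :
  (forall x y, 0 <= Rl x y <= 1) ->
  (forall x y : nat -> X, null (fun n => Rl (x n) (y n)) -> null (fun n => Rl (y n) (x n))) ->
  (forall x y z : nat -> X, null (fun n => Rl (x n) (y n)) -> null (fun n => Rl (y n) (z n)) ->
     null (fun n => Rl (x n) (z n))) ->
  is_per Rl.
Proof.
  intros Hv Hsym Htr. split; [intros [x y]; apply Hv|split].
  - apply sq_seq2; intros x y H; apply Hsym, H.
  - apply sq_seq3; intros x y z H; simpl in H.
    apply (Htr x y z); [exact (null_max_l _ _ H)|exact (null_max_r _ _ H)].
Qed.

Lemma met_per {X : Type} (d : X -> X -> R) : is_met1 d -> is_per d.
Proof. intro Hd; apply per_intro; [apply (met_val Hd)|apply (null_met_sym Hd)|apply (null_met_trans Hd)]. Qed.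

Section Per.
Context {X : Type} {Rl : X -> X -> R} (HR : is_per Rl).

Lemma per_val x y : 0 <= Rl x y <= 1.
Proof. destruct HR as [H _]. apply (H (x, y)). Qed.

Lemma null_per_sym (x y : nat -> X) :
  null (fun n => Rl (x n) (y n)) -> null (fun n => Rl (y n) (x n)).
Proof. destruct HR as [_ [Hs _]]. exact (sq_apply _ _ (fun n => (x n, y n)) Hs). Qed.

Lemma null_per_trans (x y z : nat -> X) : null (fun n => Rl (x n) (y n)) ->
  null (fun n => Rl (y n) (z n)) -> null (fun n => Rl (x n) (z n)).
Proof.
  intros H1 H2. destruct HR as [_ [_ Ht]].
  exact (sq_apply _ _ (fun n => (x n, y n, z n)) Ht (null_max _ _ H1 H2)).
Qed.

Lemma null_per_refl_r (x y : nat -> X) :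
  null (fun n => Rl (x n) (y n)) -> null (fun n => Rl (y n) (y n)).
Proof. intro H. apply (null_per_trans y x y); [apply null_per_sym|]; auto. Qed.
End Per.


(* Besides taking values in [0,1], a PER-morphism is strict, extensional,
   single-valued and total. *)
Lemma permor_intro {X Y : Type} (RX : X -> X -> R) (RY : Y -> Y -> R) (F : X -> Y -> R) :
  (forall x y, 0 <= F x y <= 1) ->
  (forall (x : nat -> X) (y : nat -> Y), null (fun n => F (x n) (y n)) ->
     null (fun n => RX (x n) (x n)) /\ null (fun n => RY (y n) (y n))) ->
  (forall (x x' : nat -> X) (y y' : nat -> Y), null (fun n => F (x n) (y n)) ->
     null (fun n => RX (x n) (x' n)) -> null (fun n => RY (y n) (y' n)) ->
     null (fun n => F (x' n) (y' n))) ->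
  (forall (x : nat -> X) (y y' : nat -> Y), null (fun n => F (x n) (y n)) ->
     null (fun n => F (x n) (y' n)) -> null (fun n => RY (y n) (y' n))) ->
  (forall x : nat -> X, null (fun n => RX (x n) (x n)) ->
     exists y : nat -> Y, null (fun n => F (x n) (y n))) ->
  is_permor RX RY F.
Proof.
  intros Hv Hstr Hext Hfun Htot.
  split; [intros [x y]; apply Hv|].
  split; [apply sq_seq2; intros x y H; destruct (Hstr x y H); apply null_max; auto|].
  split; [apply sq_seq4; intros x y x' y' H; simpl in H|].
  { apply (Hext x x' y y'); [exact (null_max_l _ _ (null_max_l _ _ H))
      |exact (null_max_r _ _ (null_max_l _ _ H))|exact (null_max_r _ _ H)]. }
  split; [apply sq_seq3; intros x y y' H; simpl in H|].
  { apply (Hfun x y y'); [exact (null_max_l _ _ H)|exact (null_max_r _ _ H)]. }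
  apply sq_seq; intros x H. destruct (Htot x H) as [y Hy].
  apply (null_inf_intro _ y); [intros; apply Hv|exact Hy].
Qed.

Section Morphism.
Context {X Y : Type} {RX : X -> X -> R} {RY : Y -> Y -> R} {F : X -> Y -> R}
  (HF : is_permor RX RY F).

Lemma mor_val x y : 0 <= F x y <= 1.
Proof. destruct HF as [H _]. apply (H (x, y)). Qed.

Lemma mor_dom (x : nat -> X) (y : nat -> Y) :
  null (fun n => F (x n) (y n)) -> null (fun n => RX (x n) (x n)).
Proof. intro H. destruct HF as [_ [H2 _]]. exact (null_max_l _ _ (sq_apply _ _ (fun n => (x n, y n)) H2 H)). Qed.

Lemma mor_cod (x : nat -> X) (y : nat -> Y) :
  null (fun n => F (x n) (y n)) -> null (fun n => RY (y n) (y n)).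
Proof. intro H. destruct HF as [_ [H2 _]]. exact (null_max_r _ _ (sq_apply _ _ (fun n => (x n, y n)) H2 H)). Qed.

Lemma mor_ext (x x' : nat -> X) (y y' : nat -> Y) : null (fun n => F (x n) (y n)) ->
  null (fun n => RX (x n) (x' n)) -> null (fun n => RY (y n) (y' n)) -> null (fun n => F (x' n) (y' n)).
Proof.
  intros H1 H2 H3. destruct HF as [_ [_ [H _]]].
  exact (sq_apply _ _ (fun n => (x n, y n, x' n, y' n)) H (null_max _ _ (null_max _ _ H1 H2) H3)).
Qed.

Lemma mor_fun (x : nat -> X) (y y' : nat -> Y) : null (fun n => F (x n) (y n)) ->
  null (fun n => F (x n) (y' n)) -> null (fun n => RY (y n) (y' n)).
Proof.
  intros H1 H2. destruct HF as [_ [_ [_ [H _]]]].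
  exact (sq_apply _ _ (fun n => (x n, y n, y' n)) H (null_max _ _ H1 H2)).
Qed.

Lemma mor_tot (x : nat -> X) :
  null (fun n => RX (x n) (x n)) -> exists y : nat -> Y, null (fun n => F (x n) (y n)).
Proof.
  intro H. destruct HF as [_ [_ [_ [_ H5]]]].
  apply (null_inf_elim (fun n => F (x n))); [intros; apply mor_val|exact (sq_apply _ _ x H5 H)].
Qed.
End Morphism.


Section Composition.
Context {X Y Z : Type} {RX : X -> X -> R} {RY : Y -> Y -> R} {RZ : Z -> Z -> R}
  {F : X -> Y -> R} {H : Y -> Z -> R} (HF : is_permor RX RY F) (HH : is_permor RY RZ H).

Lemma pcomp_elim (x : nat -> X) (z : nat -> Z) : null (fun n => pcomp F H (x n) (z n)) ->
  exists y : nat -> Y, null (fun n => F (x n) (y n)) /\ null (fun n => H (y n) (z n)).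
Proof.
  intro Hn. destruct (null_inf_elim (fun n y => Rmax (F (x n) y) (H y (z n)))) as [y Hy].
  - intros; apply Rmax_nonneg, (mor_val HF).
  - exact Hn.
  - exists y; split; [exact (null_max_l _ _ Hy)|exact (null_max_r _ _ Hy)].
Qed.

Lemma pcomp_intro (x : nat -> X) (y : nat -> Y) (z : nat -> Z) :
  null (fun n => F (x n) (y n)) -> null (fun n => H (y n) (z n)) ->
  null (fun n => pcomp F H (x n) (z n)).
Proof.
  intros H1 H2. apply (null_inf_intro (fun n y => Rmax (F (x n) y) (H y (z n))) y).
  - intros; apply Rmax_nonneg, (mor_val HF).
  - apply null_max; auto.
Qed.

Lemma pcomp_mor : is_permor RX RZ (pcomp F H).
Proof.
  apply permor_intro.
  - intros x z. unfold pcomp.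
    split; [apply inf01_ge0|apply inf01_le1]; intros; apply Rmax_nonneg, (mor_val HF).
  - intros x z Hn. destruct (pcomp_elim x z Hn) as [y [H1 H2]].
    split; [exact (mor_dom HF _ _ H1)|exact (mor_cod HH _ _ H2)].
  - intros x x' z z' Hn Hx Hz. destruct (pcomp_elim x z Hn) as [y [H1 H2]].
    apply (pcomp_intro _ y).
    + apply (mor_ext HF x x' y y); auto. exact (mor_cod HF _ _ H1).
    + apply (mor_ext HH y y z z'); auto. exact (mor_cod HF _ _ H1).
  - intros x z z' Hz Hz'.
    destruct (pcomp_elim x z Hz) as [y [H1 H2]]. destruct (pcomp_elim x z' Hz') as [y' [H1' H2']].
    apply (mor_fun HH y z z'); auto.
    apply (mor_ext HH y' y z' z'); [exact H2'|exact (mor_fun HF x y' y H1' H1)|exact (mor_cod HH _ _ H2')].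
  - intros x Hx. destruct (mor_tot HF x Hx) as [y Hy].
    destruct (mor_tot HH y (mor_cod HF _ _ Hy)) as [z Hz].
    exists z. apply (pcomp_intro _ y); auto.
Qed.
End Composition.


Lemma pereq_apply {X Y : Type} (F F' : X -> Y -> R) (x : nat -> X) (y : nat -> Y) :
  pereq F F' -> null (fun n => F (x n) (y n)) -> null (fun n => F' (x n) (y n)).
Proof. intros H; exact (sq_apply _ _ (fun n => (x n, y n)) H). Qed.

(* Between parallel morphisms, F ⊑ F' already forces F' ⊑ F, so pereq is an
   equivalence on morphisms. *)
Lemma pereq_sym {X Y : Type} (RX : X -> X -> R) (RY : Y -> Y -> R) (F F' : X -> Y -> R) :
  is_per RY -> is_permor RX RY F -> is_permor RX RY F' -> pereq F F' -> pereq F' F.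
Proof.
  intros HY HF HF' Hle. apply sq_seq2; intros x y Hn; simpl in *.
  destruct (mor_tot HF x (mor_dom HF' _ _ Hn)) as [y' Hy'].
  assert (E := mor_fun HF' x y' y (pereq_apply _ _ _ _ Hle Hy') Hn).
  apply (mor_ext HF x x y' y); auto. exact (mor_dom HF _ _ Hy').
Qed.

Lemma unif_cont_null {X Y : Type} (dX : X -> X -> R) (dY : Y -> Y -> R) f (x x' : nat -> X) :
  unif_cont dX dY f -> null (fun n => dX (x n) (x' n)) -> null (fun n => dY (f (x n)) (f (x' n))).
Proof.
  intros Hf H e He. destruct (Hf e He) as [del [Hdel Hc]]. destruct (H (del/2) ltac:(lra)) as [N HN].
  exists N; intros n Hn. left. apply Hc. specialize (HN n Hn). lra.
Qed.

Lemma unif_cont_of_sq {X Y : Type} (dX : X -> X -> R) (dY : Y -> Y -> R) f :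
  sq (fun p : X * X => dX (fst p) (snd p)) (fun p => dY (f (fst p)) (f (snd p))) -> unif_cont dX dY f.
Proof.
  intros H e He. destruct (H (e/2) ltac:(lra)) as [del [Hdel Hc]]. exists del; split; auto.
  intros x x' Hx. assert (dY (f x) (f x') <= e/2) by (apply (Hc (x, x')); simpl; lra). lra.
Qed.

Lemma Gmor_mor {X Y : Type} (dX : X -> X -> R) (dY : Y -> Y -> R) f :
  is_met1 dX -> is_met1 dY -> unif_cont dX dY f -> is_permor dX dY (Gmor dY f).
Proof.
  intros HX HY Hf. unfold Gmor. apply permor_intro.
  - intros; apply (met_val HY).
  - intros x y _; split; apply null_met_refl; auto.
  - intros x x' y y' H Hx Hy. apply (null_met_trans HY _ (fun n => f (x n))).
    + apply (null_met_sym HY), (unif_cont_null dX dY f); auto.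
    + apply (null_met_trans HY _ y); auto.
  - intros x y y' H H'. apply (null_met_trans HY _ (fun n => f (x n))); auto. apply (null_met_sym HY); auto.
  - intros x _. exists (fun n => f (x n)). apply (null_met_refl HY).
Qed.

Lemma G_id {X : Type} (d : X -> X -> R) : pereq (Gmor d (fun x => x)) d.
Proof. apply sq_pointwise; intros; unfold Gmor; lra. Qed.

Lemma G_comp {X Y Z : Type} (dY : Y -> Y -> R) (dZ : Z -> Z -> R) (f : X -> Y) (g : Y -> Z) :
  is_met1 dY -> pereq (Gmor dZ (fun x => g (f x))) (pcomp (Gmor dY f) (Gmor dZ g)).
Proof.
  intros HY. apply sq_seq2; intros x z H; simpl in *.
  apply (null_inf_intro _ (fun n => f (x n))).
  - intros; apply Rmax_nonneg, (met_val HY).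
  - unfold Gmor. apply null_max; auto. apply (null_met_refl HY).
Qed.

(* Fullness, pointwise: a morphism F : G(X) -> G(Y) into a complete space
   attains the value 0 at each x, at the limit of a Cauchy sequence of
   approximate values. *)
Lemma permor_attains_zero {X Y : Type} (dX : X -> X -> R) (dY : Y -> Y -> R) (F : X -> Y -> R) :
  is_met1 dX -> is_cmet1 dY -> is_permor dX dY F -> forall x, exists y, F x y = 0.
Proof.
  intros HX [HY HYc] HF x.
  destruct (mor_tot HF (fun _ => x) (null_met_refl HX _)) as [y Hy].
  destruct (HYc y) as [l Hl].
  { intros e He. destruct HF as [_ [_ [_ [H4 _]]]]. destruct (H4 (e/2) ltac:(lra)) as [del [Hdel Hc]].
    destruct (Hy del Hdel) as [N HN]. exists N. intros n m Hn Hm.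
    assert (dY (y n) (y m) <= e/2) by (apply (Hc (x, y n, y m)); apply Rmax_lub; auto). lra. }
  exists l. assert (Hl' : null (fun n => dY (y n) l)).
  { intros e He. destruct (Hl e He) as [N HN]. exists N; intros n Hn; left; auto. }
  assert (A := mor_ext HF (fun _ => x) (fun _ => x) y (fun _ => l) Hy (null_met_refl HX _) Hl').
  apply Rle_antisym; [|apply (mor_val HF)].
  apply Rnot_lt_le; intro Hlt. destruct (A (F x l / 2) ltac:(lra)) as [N HN].
  specialize (HN N (le_n _)); simpl in HN; lra.
Qed.

Lemma G_full {X Y : Type} (dX : X -> X -> R) (dY : Y -> Y -> R) (F : X -> Y -> R) :
  is_cmet1 dX -> is_cmet1 dY -> is_permor dX dY F ->
  exists f : X -> Y, unif_cont dX dY f /\ pereq (Gmor dY f) F.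
Proof.
  intros [HX _] HYc HF. assert (HY := proj1 HYc).
  destruct (choice _ (permor_attains_zero dX dY F HX HYc HF)) as [f Hf].
  assert (Hf0 : forall x : nat -> X, null (fun n => F (x n) (f (x n))))
    by (intro x; apply null_nonpos; intro n; rewrite Hf; lra).
  exists f. split.
  - apply unif_cont_of_sq, sq_seq2; intros x x' H; simpl in *.
    apply (mor_fun HF x'); auto.
    apply (mor_ext HF x x' (fun n => f (x n)) (fun n => f (x n))); auto. apply (null_met_refl HY).
  - apply sq_seq2; intros x y H; simpl in *. unfold Gmor in H.
    apply (mor_ext HF x x (fun n => f (x n)) y); auto. apply (null_met_refl HX).
Qed.

Lemma G_faithful {X Y : Type} (dY : Y -> Y -> R) (f g : X -> Y) :
  is_met1 dY -> pereq (Gmor dY f) (Gmor dY g) -> f = g.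
Proof.
  intros HY H. apply functional_extensionality; intro x.
  assert (dY (g x) (f x) = 0).
  { apply Rle_antisym; [|apply (met_val HY)]. apply Rnot_lt_le; intro Hlt.
    destruct (H (dY (g x) (f x) / 2) ltac:(lra)) as [del [Hdel Hc]].
    specialize (Hc (x, f x)). unfold Gmor in Hc; simpl in Hc. rewrite (met_refl HY) in Hc.
    assert (dY (g x) (f x) <= dY (g x) (f x) / 2) by (apply Hc; lra). lra. }
  symmetry; apply (met_eq HY); auto.
Qed.

(* The one-point space is terminal in PER(U): the unique morphism from (C,RC)
   is "c is defined". *)
Lemma dunit_terminal : is_per_terminal dunit.
Proof.
  assert (Hnull : forall u v : nat -> unit, null (fun n => dunit (u n) (v n)))
    by (intros; apply null_nonpos; intro; unfold dunit; lra).
  split; [apply per_intro; auto; intros; unfold dunit; lra|].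
  intros C RC HC. split.
  - exists (fun c _ => RC c c). apply permor_intro; auto.
    + intros; apply (per_val HC).
    + intros c c' u u' H Hc _. apply (null_per_refl_r HC c); auto.
    + intros c H. exists (fun _ => tt); auto.
  - intros h h' Hh Hh'. apply sq_seq2; intros c u H; simpl in *.
    destruct (mor_tot Hh' c (mor_dom Hh _ _ H)) as [u' Hu'].
    apply (mor_ext Hh' c c u' u); auto. exact (mor_dom Hh _ _ H).
Qed.

Definition pairing {C A B : Type} (f : C -> A -> R) (g : C -> B -> R) (c : C) (p : A * B) : R :=
  Rmax (f c (fst p)) (g c (snd p)).

Section Product.
Context {X Y : Type} {dX : X -> X -> R} {dY : Y -> Y -> R} (HX : is_met1 dX) (HY : is_met1 dY).

Lemma dprod_met : is_met1 (dprod dX dY).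
Proof.
  unfold dprod. split; [|split; [|split]].
  - intros [x y] [x' y']; apply Rmax_in01; [apply (met_val HX)|apply (met_val HY)].
  - intros [x y] [x' y']; simpl. split.
    + intro H. assert (A := met_val HX x x'). assert (B := met_val HY y y').
      assert (dX x x' <= 0) by (rewrite <- H; apply Rmax_l). assert (dY y y' <= 0) by (rewrite <- H; apply Rmax_r).
      rewrite (met_eq HX x x') by lra. rewrite (met_eq HY y y') by lra. reflexivity.
    + intro E; inversion E; subst. rewrite (met_refl HX), (met_refl HY). apply Rmax_left; lra.
  - intros [x y] [x' y']; simpl. rewrite (met_sym HX), (met_sym HY); auto.
  - intros [x y] [x' y'] [x'' y'']; simpl.
    assert (A1 := met_tri HX x x' x''). assert (A2 := met_tri HY y y' y'').
    assert (B1 := Rmax_l (dX x x') (dY y y')). assert (B2 := Rmax_r (dX x x') (dY y y')).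
    assert (B3 := Rmax_l (dX x' x'') (dY y' y'')). assert (B4 := Rmax_r (dX x' x'') (dY y' y'')).
    apply Rmax_lub; lra.
Qed.

Lemma null_dprod_l (p q : nat -> X * Y) :
  null (fun n => dprod dX dY (p n) (q n)) -> null (fun n => dX (fst (p n)) (fst (q n))).
Proof. apply null_le; intro; apply Rmax_l. Qed.

Lemma null_dprod_r (p q : nat -> X * Y) :
  null (fun n => dprod dX dY (p n) (q n)) -> null (fun n => dY (snd (p n)) (snd (q n))).
Proof. apply null_le; intro; apply Rmax_r. Qed.

Lemma null_dprod_intro (p q : nat -> X * Y) :
  null (fun n => dX (fst (p n)) (fst (q n))) -> null (fun n => dY (snd (p n)) (snd (q n))) ->
  null (fun n => dprod dX dY (p n) (q n)).
Proof. intros; unfold dprod; apply null_max; auto. Qed.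

Lemma unif_cont_fst : unif_cont (dprod dX dY) dX (@fst X Y).
Proof. apply unif_cont_of_sq, sq_seq2; intros p q H; apply null_dprod_l; auto. Qed.

Lemma unif_cont_snd : unif_cont (dprod dX dY) dY (@snd X Y).
Proof. apply unif_cont_of_sq, sq_seq2; intros p q H; apply null_dprod_r; auto. Qed.

Section Pairing.
Context {C : Type} {RC : C -> C -> R} {f : C -> X -> R} {g : C -> Y -> R}
  (Hf : is_permor RC dX f) (Hg : is_permor RC dY g).

Lemma pairing_mor : is_permor RC (dprod dX dY) (pairing f g).
Proof.
  unfold pairing. apply permor_intro.
  - intros c p; apply Rmax_in01; [apply (mor_val Hf)|apply (mor_val Hg)].
  - intros c p H. split; [exact (mor_dom Hf _ _ (null_max_l _ _ H))|apply (null_met_refl dprod_met)].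
  - intros c c' p p' H Hc Hp. apply null_max.
    + apply (mor_ext Hf c c' (fun n => fst (p n))); auto. exact (null_max_l _ _ H). apply null_dprod_l; auto.
    + apply (mor_ext Hg c c' (fun n => snd (p n))); auto. exact (null_max_r _ _ H). apply null_dprod_r; auto.
  - intros c p p' H H'. apply null_dprod_intro.
    + apply (mor_fun Hf c); [exact (null_max_l _ _ H)|exact (null_max_l _ _ H')].
    + apply (mor_fun Hg c); [exact (null_max_r _ _ H)|exact (null_max_r _ _ H')].
  - intros c H. destruct (mor_tot Hf c H) as [x Hx]. destruct (mor_tot Hg c H) as [y Hy].
    exists (fun n => (x n, y n)). apply null_max; auto.
Qed.

Lemma pairing_fst : pereq (pcomp (pairing f g) (Gmor dX fst)) f.
Proof.
  apply sq_seq2; intros c x H; simpl in *.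
  destruct (pcomp_elim pairing_mor c x H) as [p [Hp Hd]]. unfold pairing, Gmor in *.
  apply (mor_ext Hf c c (fun n => fst (p n))); auto.
  exact (null_max_l _ _ Hp). exact (mor_dom Hf _ _ (null_max_l _ _ Hp)).
Qed.

Lemma pairing_snd : pereq (pcomp (pairing f g) (Gmor dY snd)) g.
Proof.
  apply sq_seq2; intros c y H; simpl in *.
  destruct (pcomp_elim pairing_mor c y H) as [p [Hp Hd]]. unfold pairing, Gmor in *.
  apply (mor_ext Hg c c (fun n => snd (p n))); auto.
  exact (null_max_r _ _ Hp). exact (mor_dom Hg _ _ (null_max_r _ _ Hp)).
Qed.
End Pairing.

Lemma product_unique {C : Type} (RC : C -> C -> R) (h h' : C -> X * Y -> R) :
  is_permor RC (dprod dX dY) h -> is_permor RC (dprod dX dY) h' ->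
  pereq (pcomp h (Gmor dX fst)) (pcomp h' (Gmor dX fst)) ->
  pereq (pcomp h (Gmor dY snd)) (pcomp h' (Gmor dY snd)) -> pereq h h'.
Proof.
  intros Hh Hh' E1 E2. apply sq_seq2; intros c p H; simpl in *.
  assert (Hp := mor_cod Hh _ _ H).
  assert (A1 : null (fun n => pcomp h (Gmor dX fst) (c n) (fst (p n)))).
  { apply (pcomp_intro Hh c p); auto. unfold Gmor; apply (null_met_refl HX). }
  assert (A2 : null (fun n => pcomp h (Gmor dY snd) (c n) (snd (p n)))).
  { apply (pcomp_intro Hh c p); auto. unfold Gmor; apply (null_met_refl HY). }
  apply (pereq_apply _ _ _ _ E1) in A1. apply (pereq_apply _ _ _ _ E2) in A2.
  destruct (pcomp_elim Hh' c _ A1) as [p1 [B1 C1]].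
  destruct (pcomp_elim Hh' c _ A2) as [p2 [B2 C2]].
  unfold Gmor in C1, C2.
  apply (mor_ext Hh' c c p1 p); [exact B1|exact (mor_dom Hh _ _ H)|apply null_dprod_intro; auto].
  apply (null_met_trans HY _ (fun n => snd (p2 n))); auto.
  apply null_dprod_r, (mor_fun Hh' c p1 p2); auto.
Qed.

Lemma dprod_product :
  is_per_product (dprod dX dY) dX dY (Gmor dX (@fst X Y)) (Gmor dY (@snd X Y)).
Proof.
  split; [apply met_per, dprod_met|].
  split; [apply Gmor_mor; [apply dprod_met|auto|apply unif_cont_fst]|].
  split; [apply Gmor_mor; [apply dprod_met|auto|apply unif_cont_snd]|].
  intros C RC f g _ Hf Hg. split.
  - exists (pairing f g). split; [apply pairing_mor; auto|split; [apply (pairing_fst Hf Hg)|apply (pairing_snd Hf Hg)]].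
  - apply product_unique.
Qed.
End Product.

Lemma cmt_val {X : Type} {d : X -> X -> R} {th : X -> R} (Hth : CMT d th) x : 0 <= th x <= 1.
Proof. apply Hth. Qed.

Lemma cmt_null {X : Type} {d : X -> X -> R} {th : X -> R} (Hth : CMT d th) (x x' : nat -> X) :
  null (fun n => d (x n) (x' n)) -> null (fun n => th (x n)) -> null (fun n => th (x' n)).
Proof.
  destruct Hth as [_ Hc]. intros H1 H2 e He. destruct (Hc (e/2) ltac:(lra)) as [del [Hdel Hc']].
  destruct (H1 (del/2) ltac:(lra)) as [N1 HN1]. destruct (H2 (e/2) ltac:(lra)) as [N2 HN2].
  exists (max N1 N2). intros n Hn. assert (A1 := HN1 n ltac:(lia)). assert (A2 := HN2 n ltac:(lia)).
  assert (A3 := Hc' (x n) (x' n) ltac:(lra)). apply Rabs_def2 in A3. lra.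
Qed.

Lemma cmt_const {X : Type} (d : X -> X -> R) c : 0 <= c <= 1 -> CMT d (fun _ => c).
Proof. intros Hc; split; [intro; auto|]. intros e He; exists 1; split; [lra|]. intros; rewrite Rminus_diag, Rabs_R0; auto. Qed.

Lemma cmt_comp {X Y : Type} (dX : X -> X -> R) (dY : Y -> Y -> R) (f : X -> Y) psi :
  CMT dY psi -> unif_cont dX dY f -> CMT dX (fun x => psi (f x)).
Proof.
  intros [Hv Hc] Hf. split; [intro; apply Hv|]. intros e He.
  destruct (Hc e He) as [d1 [Hd1 H1]]. destruct (Hf d1 Hd1) as [d2 [Hd2 H2]]. exists d2; split; auto.
Qed.

Lemma cmt_combine {X : Type} (d : X -> X -> R) (op : R -> R -> R) phi psi :
  (forall a b, 0 <= a <= 1 -> 0 <= b <= 1 -> 0 <= op a b <= 1) ->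
  (forall a b c e, Rabs (op a b - op c e) <= Rmax (Rabs (a - c)) (Rabs (b - e))) ->
  CMT d phi -> CMT d psi -> CMT d (fun x => op (phi x) (psi x)).
Proof.
  intros Hop Hlip [H1 C1] [H2 C2]. split; [intro x; apply Hop; auto|].
  intros e He. destruct (C1 e He) as [d1 [Hd1 E1]]. destruct (C2 e He) as [d2 [Hd2 E2]].
  exists (Rmin d1 d2); split; [apply Rmin_pos; auto|]. intros x x' Hx.
  eapply Rle_lt_trans; [apply Hlip|]. apply Rmax_lub_lt; [apply E1|apply E2];
    eapply Rlt_le_trans; eauto; [apply Rmin_l|apply Rmin_r].
Qed.

Lemma cmt_max {X : Type} (d : X -> X -> R) phi psi :
  CMT d phi -> CMT d psi -> CMT d (fun x => Rmax (phi x) (psi x)).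
Proof.
  apply cmt_combine; [intros; apply Rmax_in01; auto|].
  intros; unfold Rmax, Rabs; repeat destruct Rle_dec; repeat destruct Rcase_abs; lra.
Qed.

Lemma cmt_min {X : Type} (d : X -> X -> R) phi psi :
  CMT d phi -> CMT d psi -> CMT d (fun x => Rmin (phi x) (psi x)).
Proof.
  apply cmt_combine; [intros; unfold Rmin; destruct Rle_dec; lra|].
  intros; unfold Rmin, Rmax, Rabs; repeat destruct Rle_dec; repeat destruct Rcase_abs; lra.
Qed.

(* A predicate on a product is uniformly continuous in the first variable,
   uniformly in the second; hence fibrewise inf and sup stay in CMT. *)
Lemma cmt_fibre_close {X Y : Type} (dX : X -> X -> R) (dY : Y -> Y -> R) (phi : X * Y -> R) :
  is_met1 dY -> CMT (dprod dX dY) phi -> forall e, 0 < e -> exists del, 0 < del /\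
    forall x x', dX x x' < del -> forall y, phi (x, y) <= phi (x', y) + e /\ phi (x', y) <= phi (x, y) + e.
Proof.
  intros HY [_ Hc] e He. destruct (Hc e He) as [del [Hdel Hd]]. exists del; split; auto.
  intros x x' Hx y. assert (K : Rabs (phi (x, y) - phi (x', y)) < e).
  { apply Hd. unfold dprod; simpl. rewrite (met_refl HY). apply Rmax_lub_lt; auto. }
  apply Rabs_def2 in K. lra.
Qed.

Lemma cmt_inf {X Y : Type} (dX : X -> X -> R) (dY : Y -> Y -> R) (phi : X * Y -> R) :
  is_met1 dY -> CMT (dprod dX dY) phi -> CMT dX (fun x => inf01 (fun y => phi (x, y))).
Proof.
  intros HY Hphi. assert (H0 : forall x y, 0 <= phi (x, y)) by (intros; apply (cmt_val Hphi)).
  split; [intro x; split; [apply inf01_ge0|apply inf01_le1]; intros; apply H0|].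
  intros e He. destruct (cmt_fibre_close dX dY phi HY Hphi (e/2) ltac:(lra)) as [del [Hdel Hd]].
  exists del; split; auto. intros x x' Hx.
  assert (A1 := inf01_close (fun y => phi (x, y)) (fun y => phi (x', y)) (e/2)
    (H0 x) (H0 x') ltac:(lra) (fun y => proj1 (Hd x x' Hx y))).
  assert (A2 := inf01_close (fun y => phi (x', y)) (fun y => phi (x, y)) (e/2)
    (H0 x') (H0 x) ltac:(lra) (fun y => proj2 (Hd x x' Hx y))).
  apply Rabs_def1; lra.
Qed.

Lemma cmt_sup {X Y : Type} (dX : X -> X -> R) (dY : Y -> Y -> R) (phi : X * Y -> R) :
  is_met1 dY -> CMT (dprod dX dY) phi -> CMT dX (fun x => sup01 (fun y => phi (x, y))).
Proof.
  intros HY Hphi. assert (H1 : forall x y, phi (x, y) <= 1) by (intros; apply (cmt_val Hphi)).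
  split; [intro x; split; [apply sup01_ge0|apply sup01_le1]; intros; apply H1|].
  intros e He. destruct (cmt_fibre_close dX dY phi HY Hphi (e/2) ltac:(lra)) as [del [Hdel Hd]].
  exists del; split; auto. intros x x' Hx.
  assert (A1 := sup01_close (fun y => phi (x, y)) (fun y => phi (x', y)) (e/2)
    (H1 x) (H1 x') ltac:(lra) (fun y => proj1 (Hd x x' Hx y))).
  assert (A2 := sup01_close (fun y => phi (x', y)) (fun y => phi (x, y)) (e/2)
    (H1 x') (H1 x) ltac:(lra) (fun y => proj2 (Hd x x' Hx y))).
  apply Rabs_def1; lra.
Qed.

(* The metric itself is a predicate of CMT on X x X (it interprets equality). *)
Lemma cmt_dist {X : Type} (d : X -> X -> R) : is_met1 d -> CMT (dprod d d) (fun p => d (fst p) (snd p)).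
Proof.
  intros Hd. split; [intro; apply (met_val Hd)|]. intros e He. exists (e/2); split; [lra|].
  intros [x y] [x' y'] Hl; unfold dprod in Hl; simpl in *.
  assert (A1 := Rmax_l (d x x') (d y y')). assert (A2 := Rmax_r (d x x') (d y y')).
  assert (T1 := met_tri Hd x x' y). assert (T2 := met_tri Hd x' y' y).
  assert (T3 := met_tri Hd x' x y'). assert (T4 := met_tri Hd x y y').
  rewrite (met_sym Hd x' x) in T3. rewrite (met_sym Hd y' y) in T2.
  apply Rabs_def1; lra.
Qed.

Lemma null_simr_l {X : Type} (d : X -> X -> R) th (x y : nat -> X) :
  null (fun n => simr d th (x n) (y n)) -> null (fun n => th (x n)).
Proof. apply null_max_l. Qed.

Lemma null_simr_r {X : Type} (d : X -> X -> R) th (x y : nat -> X) :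
  null (fun n => simr d th (x n) (y n)) -> null (fun n => d (x n) (y n)).
Proof. apply null_max_r. Qed.

Lemma null_simr_intro {X : Type} (d : X -> X -> R) th (x y : nat -> X) :
  null (fun n => th (x n)) -> null (fun n => d (x n) (y n)) -> null (fun n => simr d th (x n) (y n)).
Proof. intros; unfold simr; apply null_max; auto. Qed.

Section Eta.
Context {X : Type} {d : X -> X -> R} (Hd : is_met1 d) {th : X -> R} (Hth : CMT d th).

Lemma simr_val x y : 0 <= simr d th x y <= 1.
Proof. apply Rmax_in01; [apply (cmt_val Hth)|apply (met_val Hd)]. Qed.

Lemma simr_per : is_per (simr d th).
Proof.
  apply per_intro; [apply simr_val| |].
  - intros x y H. apply null_simr_intro.
    + apply (cmt_null Hth x); [exact (null_simr_r _ _ _ _ H)|exact (null_simr_l _ _ _ _ H)].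
    + apply (null_met_sym Hd), (null_simr_r _ _ _ _ H).
  - intros x y z H1 H2. apply null_simr_intro; [exact (null_simr_l _ _ _ _ H1)|].
    apply (null_met_trans Hd _ y); [exact (null_simr_r _ _ _ _ H1)|exact (null_simr_r _ _ _ _ H2)].
Qed.

Lemma simr_mor : is_permor (simr d th) d (simr d th).
Proof.
  apply permor_intro; [apply simr_val| | | |].
  - intros x y H. split; [|apply (null_met_refl Hd)].
    apply null_simr_intro; [exact (null_simr_l _ _ _ _ H)|apply (null_met_refl Hd)].
  - intros x x' y y' H Hx Hy. apply null_simr_intro.
    + apply (cmt_null Hth x); [exact (null_simr_r _ _ _ _ Hx)|exact (null_simr_l _ _ _ _ Hx)].
    + apply (null_met_trans Hd _ x); [apply (null_met_sym Hd), (null_simr_r _ _ _ _ Hx)|].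
      apply (null_met_trans Hd _ y); [exact (null_simr_r _ _ _ _ H)|exact Hy].
  - intros x y y' H H'. apply (null_met_trans Hd _ x).
    + apply (null_met_sym Hd), (null_simr_r _ _ _ _ H).
    + exact (null_simr_r _ _ _ _ H').
  - intros x H. exists x; exact H.
Qed.

Lemma simr_mono : per_mono (simr d th) d (simr d th).
Proof.
  split; [apply simr_mor|]. intros C RC f g HC Hf Hg E.
  apply sq_seq2; intros c x H; simpl in *.
  assert (B : null (fun n => pcomp f (simr d th) (c n) (x n)))
    by (apply (pcomp_intro Hf c x); auto; exact (mor_cod Hf _ _ H)).
  apply (pereq_apply _ _ c x E) in B.
  destruct (pcomp_elim Hg c x B) as [x' [B1 B2]].
  apply (mor_ext Hg c c x' x); auto. exact (mor_dom Hg _ _ B1).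
Qed.

Lemma eta_subobj : is_subobj d (eta d th).
Proof. split; [apply simr_per|apply simr_mono]. Qed.
End Eta.

(* The support of a subobject S of A: the degree to which a lies in S. *)
Definition support {A : Type} (S : subrep A) (a : A) : R := inf01 (fun s => smor S s a).

Section Support.
Context {A : Type} {RA : A -> A -> R} {S : subrep A} (Hm : is_permor (srel S) RA (smor S)).

Lemma support_elim (x : nat -> A) :
  null (fun n => support S (x n)) -> exists s, null (fun n => smor S (s n) (x n)).
Proof. apply (null_inf_elim (fun n s => smor S s (x n))). intros; apply (mor_val Hm). Qed.

Lemma support_intro (x : nat -> A) s :
  null (fun n => smor S (s n) (x n)) -> null (fun n => support S (x n)).
Proof. apply (null_inf_intro (fun n s => smor S s (x n)) s). intros; apply (mor_val Hm). Qed.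
End Support.

Lemma support_eta {X : Type} (d : X -> X -> R) th :
  is_met1 d -> CMT d th -> sq th (support (eta d th)) /\ sq (support (eta d th)) th.
Proof.
  intros Hd Hth. assert (Hm := simr_mor Hd Hth). split; apply sq_seq; intros x H.
  - apply (support_intro (S := eta d th) Hm x x). apply null_simr_intro; auto. apply (null_met_refl Hd).
  - destruct (support_elim (S := eta d th) Hm x H) as [x' Hx'].
    apply (cmt_null Hth x'); [exact (null_simr_r _ _ _ _ Hx')|exact (null_simr_l _ _ _ _ Hx')].
Qed.

Definition mono_injective {B A : Type} (RB : B -> B -> R) (m : B -> A -> R) : Prop :=
  sq (fun t : B * B * A => let '(b, b', a) := t in Rmax (m b a) (m b' a))
     (fun t : B * B * A => let '(b, b', _) := t in RB b b').

Lemma null_injective {B A : Type} (RB : B -> B -> R) (m : B -> A -> R) (b b' : nat -> B) (a : nat -> A) :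
  mono_injective RB m -> null (fun n => m (b n) (a n)) -> null (fun n => m (b' n) (a n)) ->
  null (fun n => RB (b n) (b' n)).
Proof. intros H H1 H2. exact (sq_apply _ _ (fun n => (b n, b' n, a n)) H (null_max _ _ H1 H2)). Qed.

(* The kernel pair of m: pairs (b,b') with overlapping images, together
   with its two projections, which m identifies. *)
Section KernelPair.
Context {B A : Type} {RB : B -> B -> R} {RA : A -> A -> R} {m : B -> A -> R}
  (HB : is_per RB) (Hm : is_permor RB RA m).

Definition overlap (p : B * B) : R := inf01 (fun a => Rmax (m (fst p) a) (m (snd p) a)).

Definition kernel_rel (p p' : B * B) : R :=
  Rmax (Rmax (RB (fst p) (fst p')) (RB (snd p) (snd p'))) (Rmax (overlap p) (overlap p')).

Definition kernel_proj (sel : B * B -> B) (p : B * B) (b : B) : R := Rmax (RB (sel p) b) (overlap p).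

Lemma overlap_val p : 0 <= overlap p <= 1.
Proof. unfold overlap; split; [apply inf01_ge0|apply inf01_le1]; intros; apply Rmax_nonneg, (mor_val Hm). Qed.

Lemma overlap_elim (p : nat -> B * B) : null (fun n => overlap (p n)) ->
  exists a, null (fun n => m (fst (p n)) (a n)) /\ null (fun n => m (snd (p n)) (a n)).
Proof.
  intro H. destruct (null_inf_elim _ ltac:(intros; apply Rmax_nonneg, (mor_val Hm)) H) as [a Ha].
  exists a; split; [exact (null_max_l _ _ Ha)|exact (null_max_r _ _ Ha)].
Qed.

Lemma overlap_intro (p : nat -> B * B) a : null (fun n => m (fst (p n)) (a n)) ->
  null (fun n => m (snd (p n)) (a n)) -> null (fun n => overlap (p n)).
Proof.
  intros H1 H2. apply (null_inf_intro _ a); [intros; apply Rmax_nonneg, (mor_val Hm)|apply null_max; auto].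
Qed.

Lemma kernel_rel_per : is_per kernel_rel.
Proof.
  unfold kernel_rel. apply per_intro.
  - intros p p'. apply Rmax_in01; apply Rmax_in01; first [apply (per_val HB)|apply overlap_val].
  - intros p p' H. assert (H1 := null_max_l _ _ H). assert (H2 := null_max_r _ _ H).
    apply null_max; apply null_max.
    + apply (null_per_sym HB), (null_max_l _ _ H1).
    + apply (null_per_sym HB), (null_max_r _ _ H1).
    + exact (null_max_r _ _ H2).
    + exact (null_max_l _ _ H2).
  - intros p q r H H'. assert (H1 := null_max_l _ _ H). assert (H1' := null_max_l _ _ H').
    apply null_max; apply null_max.
    + apply (null_per_trans HB _ (fun n => fst (q n))); [exact (null_max_l _ _ H1)|exact (null_max_l _ _ H1')].
    + apply (null_per_trans HB _ (fun n => snd (q n))); [exact (null_max_r _ _ H1)|exact (null_max_r _ _ H1')].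
    + exact (null_max_l _ _ (null_max_r _ _ H)).
    + exact (null_max_r _ _ (null_max_r _ _ H')).
Qed.

Lemma null_kernel_overlap (p p' : nat -> B * B) :
  null (fun n => kernel_rel (p n) (p' n)) -> null (fun n => overlap (p n)).
Proof. intro H. exact (null_max_l _ _ (null_max_r _ _ H)). Qed.

Lemma kernel_proj_mor (sel : B * B -> B) :
  (forall p p' : nat -> B * B, null (fun n => kernel_rel (p n) (p' n)) ->
     null (fun n => RB (sel (p n)) (sel (p' n)))) ->
  is_permor kernel_rel RB (kernel_proj sel).
Proof.
  intro Hsel. unfold kernel_proj. apply permor_intro.
  - intros p b; apply Rmax_in01; [apply (per_val HB)|apply overlap_val].
  - intros p b H. split; [|exact (null_per_refl_r HB _ _ (null_max_l _ _ H))].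
    destruct (overlap_elim p (null_max_r _ _ H)) as [a [H1 H2]].
    unfold kernel_rel. apply null_max; [apply null_max|apply null_max; apply (overlap_intro _ a); auto].
    + exact (mor_dom Hm _ _ H1).
    + exact (mor_dom Hm _ _ H2).
  - intros p p' b b' H Hp Hb. apply null_max; [|exact (null_max_r _ _ (null_max_r _ _ Hp))].
    apply (null_per_trans HB _ (fun n => sel (p n))); [apply (null_per_sym HB), Hsel; auto|].
    apply (null_per_trans HB _ b); auto. exact (null_max_l _ _ H).
  - intros p b b' H H'. apply (null_per_trans HB _ (fun n => sel (p n))).
    + apply (null_per_sym HB), (null_max_l _ _ H).
    + exact (null_max_l _ _ H').
  - intros p H. exists (fun n => sel (p n)). apply null_max; [apply Hsel; auto|].
    exact (null_kernel_overlap _ _ H).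
Qed.

Lemma kernel_fst_mor : is_permor kernel_rel RB (kernel_proj fst).
Proof. apply kernel_proj_mor. intros p p' H. exact (null_max_l _ _ (null_max_l _ _ H)). Qed.

Lemma kernel_snd_mor : is_permor kernel_rel RB (kernel_proj snd).
Proof. apply kernel_proj_mor. intros p p' H. exact (null_max_r _ _ (null_max_l _ _ H)). Qed.

Lemma kernel_proj_eq : pereq (pcomp (kernel_proj fst) m) (pcomp (kernel_proj snd) m).
Proof.
  apply sq_seq2; intros p a H; simpl in *.
  destruct (pcomp_elim kernel_fst_mor p a H) as [b [H1 H2]]. unfold kernel_proj in H1.
  assert (M1 : null (fun n => m (fst (p n)) (a n))).
  { apply (mor_ext Hm b _ a a); auto.
    - apply (null_per_sym HB), (null_max_l _ _ H1).
    - exact (mor_cod Hm _ _ H2). }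
  destruct (overlap_elim p (null_max_r _ _ H1)) as [a' [A1 A2]].
  apply (pcomp_intro kernel_snd_mor p (fun n => snd (p n))).
  - unfold kernel_proj. apply null_max; [exact (mor_dom Hm _ _ A2)|exact (null_max_r _ _ H1)].
  - apply (mor_ext Hm (fun n => snd (p n)) _ a' a); auto.
    + exact (mor_dom Hm _ _ A2).
    + exact (mor_fun Hm _ _ _ A1 M1).
Qed.
End KernelPair.

(* Monos in PER(U) are injective: apply the mono property to the two
   projections of the kernel pair. *)
Lemma per_mono_injective {B A : Type} (RB : B -> B -> R) (RA : A -> A -> R) (m : B -> A -> R) :
  is_per RB -> per_mono RB RA m -> mono_injective RB m.
Proof.
  intros HB [Hm Hmono].
  assert (E := Hmono _ _ _ _ (kernel_rel_per HB Hm) (kernel_fst_mor HB Hm) (kernel_snd_mor HB Hm)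
    (kernel_proj_eq HB Hm)).
  apply sq_seq3; intros b b' a H; simpl in *.
  assert (F : null (fun n => kernel_proj (RB := RB) (m := m) fst (b n, b' n) (b n))).
  { unfold kernel_proj; simpl. apply null_max; [exact (mor_dom Hm _ _ (null_max_l _ _ H))|].
    apply (overlap_intro Hm _ a); [exact (null_max_l _ _ H)|exact (null_max_r _ _ H)]. }
  apply (pereq_apply _ _ _ _ E) in F. unfold kernel_proj in F; simpl in F.
  apply (null_per_sym HB). exact (null_max_l _ _ F).
Qed.

Definition eta_factor {Z X : Type} (f : Z -> X) (th : Z -> R) (S : subrep X) (z : Z) (s : sdom S) : R :=
  Rmax (th z) (smor S s (f z)).

Section Factor.
Context {Z X : Type} {dZ : Z -> Z -> R} {d : X -> X -> R} (HZ : is_met1 dZ)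
  {f : Z -> X} (Hf : unif_cont dZ d f) {th : Z -> R} (Hth : CMT dZ th)
  {S : subrep X} (Hm : is_permor (srel S) d (smor S)) (Hinj : mono_injective (srel S) (smor S))
  (Hle : sq th (fun z => support S (f z))).

Lemma eta_factor_mor : is_permor (simr dZ th) (srel S) (eta_factor f th S).
Proof.
  unfold eta_factor. apply permor_intro.
  - intros z s; apply Rmax_in01; [apply (cmt_val Hth)|apply (mor_val Hm)].
  - intros z s H. split; [|exact (mor_dom Hm _ _ (null_max_r _ _ H))].
    apply null_simr_intro; [exact (null_max_l _ _ H)|apply (null_met_refl HZ)].
  - intros z z' s s' H Hz Hs. apply null_max.
    + apply (cmt_null Hth z); [exact (null_simr_r _ _ _ _ Hz)|exact (null_max_l _ _ H)].
    + apply (mor_ext Hm s s' (fun n => f (z n)) (fun n => f (z' n))); auto.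
      * exact (null_max_r _ _ H).
      * apply (unif_cont_null dZ d f); auto. exact (null_simr_r _ _ _ _ Hz).
  - intros z s s' H H'. apply (null_injective _ _ s s' (fun n => f (z n)) Hinj).
    + exact (null_max_r _ _ H).
    + exact (null_max_r _ _ H').
  - intros z H. assert (Hz := null_simr_l _ _ _ _ H).
    destruct (support_elim Hm _ (sq_apply _ _ z Hle Hz)) as [s Hs].
    exists s. apply null_max; auto.
Qed.

Lemma eta_factor_comp : pereq (pcomp (eta_factor f th S) (smor S)) (fun z x => Rmax (th z) (d (f z) x)).
Proof.
  apply sq_seq2; intros z x H; simpl in *.
  destruct (pcomp_elim eta_factor_mor z x H) as [s [H1 H2]]. unfold eta_factor in H1.
  apply null_max; [exact (null_max_l _ _ H1)|].
  apply (mor_fun Hm s); auto. exact (null_max_r _ _ H1).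
Qed.
End Factor.

Lemma eta_below_of_sq {X : Type} (d : X -> X -> R) (th : X -> R) (S : subrep X) :
  is_met1 d -> CMT d th -> is_permor (srel S) d (smor S) -> mono_injective (srel S) (smor S) ->
  sq th (support S) -> sub_le (eta d th) S.
Proof.
  intros Hd Hth Hm Hinj Hle.
  assert (Hid : unif_cont d d (fun x => x)) by (intros e He; exists e; split; auto).
  exists (eta_factor (fun x => x) th S). split.
  - exact (eta_factor_mor Hd Hid Hth Hm Hinj Hle).
  - exact (eta_factor_comp Hd Hid Hth Hm Hinj Hle).
Qed.

Lemma sq_of_eta_below {X : Type} (d : X -> X -> R) (th : X -> R) (S : subrep X) :
  is_met1 d -> CMT d th -> is_permor (srel S) d (smor S) ->
  sub_le (eta d th) S -> sq th (support S).
Proof.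
  intros Hd Hth Hm [k [Hk Hpe]]. cbn [eta sdom srel smor] in *.
  assert (E := pereq_sym _ _ _ _ (met_per d Hd) (pcomp_mor Hk Hm) (simr_mor Hd Hth) Hpe).
  apply sq_seq; intros x H.
  assert (A : null (fun n => simr d th (x n) (x n))) by (apply null_simr_intro; auto; apply (null_met_refl Hd)).
  apply (pereq_apply _ _ x x E) in A.
  destruct (pcomp_elim Hk x x A) as [s [_ B]].
  exact (support_intro Hm x s B).
Qed.

Lemma eta_below_iff {X : Type} (d : X -> X -> R) (th : X -> R) (S : subrep X) :
  is_met1 d -> CMT d th -> is_subobj d S -> (sub_le (eta d th) S <-> sq th (support S)).
Proof.
  intros Hd Hth [HSp HSm]. split; [apply sq_of_eta_below; auto; apply HSm|].
  apply eta_below_of_sq; auto; [apply HSm|exact (per_mono_injective _ _ _ HSp HSm)].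
Qed.

(* eta(th) lies above a subobject S exactly when support S ⊑ th; the
   factorization is m_S itself. *)
Lemma eta_above_iff {X : Type} (d : X -> X -> R) (th : X -> R) (S : subrep X) :
  is_met1 d -> CMT d th -> is_permor (srel S) d (smor S) -> (sub_le S (eta d th) <-> sq (support S) th).
Proof.
  intros Hd Hth Hm. split.
  - intros [k [Hk Hpe]]. cbn [eta sdom srel smor] in *.
    assert (E := pereq_sym _ _ _ _ (met_per d Hd) (pcomp_mor Hk (simr_mor Hd Hth)) Hm Hpe).
    apply sq_seq; intros x H. destruct (support_elim Hm x H) as [s Hs].
    apply (pereq_apply _ _ s x E) in Hs.
    destruct (pcomp_elim Hk s x Hs) as [x' [_ B]].
    apply (cmt_null Hth x'); [exact (null_simr_r _ _ _ _ B)|exact (null_simr_l _ _ _ _ B)].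
  - intros Hle. assert (Hin : forall s x, null (fun n => smor S (s n) (x n)) -> null (fun n => th (x n)))
      by (intros s x H; exact (sq_apply _ _ x Hle (support_intro Hm x s H))).
    assert (Hk : is_permor (srel S) (simr d th) (smor S)).
    { apply permor_intro; [apply (mor_val Hm)| | | |].
      - intros s x H. split; [exact (mor_dom Hm _ _ H)|].
        apply null_simr_intro; [exact (Hin s x H)|apply (null_met_refl Hd)].
      - intros s s' x x' H Hs Hx. apply (mor_ext Hm s s' x x'); auto. exact (null_simr_r _ _ _ _ Hx).
      - intros s x x' H H'. apply null_simr_intro; [exact (Hin s x H)|exact (mor_fun Hm s x x' H H')].
      - exact (mor_tot Hm). }
    exists (smor S). split; [exact Hk|].
    apply sq_seq2; intros s x H; simpl in *.
    destruct (pcomp_elim Hk s x H) as [x' [H1 H2]].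
    apply (mor_ext Hm s s x' x); [exact H1|exact (mor_dom Hm _ _ H1)|exact (null_simr_r _ _ _ _ H2)].
Qed.

Lemma eta_le {X : Type} (d : X -> X -> R) (phi psi : X -> R) :
  is_met1 d -> CMT d phi -> CMT d psi -> (sq phi psi <-> sub_le (eta d phi) (eta d psi)).
Proof.
  intros Hd Hphi Hpsi. rewrite (eta_below_iff d phi _ Hd Hphi (eta_subobj Hd Hpsi)).
  destruct (support_eta d psi Hd Hpsi) as [E1 E2]. split; intro H; eapply sq_trans; eauto.
Qed.

(* The pullback of a subobject S of G(Y) along G(f) : G(X) -> G(Y): pairs
   (x,s) weighted by how much s lies over f(x). *)
Section Pullback.
Context {X Y : Type} {dX : X -> X -> R} {dY : Y -> Y -> R} (HX : is_met1 dX) (HY : is_met1 dY)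
  {f : X -> Y} (Hf : unif_cont dX dY f) {S : subrep Y} (HS : is_per (srel S))
  (Hm : is_permor (srel S) dY (smor S)).

Definition pb_weight (p : X * sdom S) : R := smor S (snd p) (f (fst p)).

Definition pb_rel (p p' : X * sdom S) : R :=
  Rmax (Rmax (dX (fst p) (fst p')) (srel S (snd p) (snd p'))) (Rmax (pb_weight p) (pb_weight p')).

Definition pb_mono (p : X * sdom S) (x : X) : R := Rmax (dX (fst p) x) (pb_weight p).

Definition pb_proj (p : X * sdom S) (s : sdom S) : R := Rmax (srel S (snd p) s) (pb_weight p).

Definition pb_sub : subrep X := Subrep (X * sdom S) pb_rel pb_mono.

Lemma pb_weight_val p : 0 <= pb_weight p <= 1.
Proof. apply (mor_val Hm). Qed.

Lemma null_pb_weight (p p' : nat -> X * sdom S) :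
  null (fun n => pb_rel (p n) (p' n)) -> null (fun n => pb_weight (p n)).
Proof. intro H. exact (null_max_l _ _ (null_max_r _ _ H)). Qed.

Lemma null_pb_rel_refl (p : nat -> X * sdom S) :
  null (fun n => pb_weight (p n)) -> null (fun n => pb_rel (p n) (p n)).
Proof.
  intro H. apply null_max; [apply null_max|apply null_max; auto].
  - apply (null_met_refl HX).
  - exact (mor_dom Hm _ _ H).
Qed.

Lemma pb_rel_per : is_per pb_rel.
Proof.
  unfold pb_rel. apply per_intro.
  - intros p p'. apply Rmax_in01; apply Rmax_in01;
      first [apply (met_val HX)|apply (per_val HS)|apply pb_weight_val].
  - intros p p' H. assert (H1 := null_max_l _ _ H). assert (H2 := null_max_r _ _ H).
    apply null_max; apply null_max.
    + apply (null_met_sym HX), (null_max_l _ _ H1).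
    + apply (null_per_sym HS), (null_max_r _ _ H1).
    + exact (null_max_r _ _ H2).
    + exact (null_max_l _ _ H2).
  - intros p q r H H'. assert (H1 := null_max_l _ _ H). assert (H1' := null_max_l _ _ H').
    apply null_max; apply null_max.
    + apply (null_met_trans HX _ (fun n => fst (q n))); [exact (null_max_l _ _ H1)|exact (null_max_l _ _ H1')].
    + apply (null_per_trans HS _ (fun n => snd (q n))); [exact (null_max_r _ _ H1)|exact (null_max_r _ _ H1')].
    + exact (null_max_l _ _ (null_max_r _ _ H)).
    + exact (null_max_r _ _ (null_max_r _ _ H')).
Qed.

Lemma pb_mono_mor : is_permor pb_rel dX pb_mono.
Proof.
  unfold pb_mono. apply permor_intro.
  - intros p x; apply Rmax_in01; [apply (met_val HX)|apply pb_weight_val].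
  - intros p x H. split; [apply null_pb_rel_refl, (null_max_r _ _ H)|apply (null_met_refl HX)].
  - intros p p' x x' H Hp Hx. apply null_max; [|exact (null_max_r _ _ (null_max_r _ _ Hp))].
    apply (null_met_trans HX _ (fun n => fst (p n))).
    + apply (null_met_sym HX), (null_max_l _ _ (null_max_l _ _ Hp)).
    + apply (null_met_trans HX _ x); [exact (null_max_l _ _ H)|exact Hx].
  - intros p x x' H H'. apply (null_met_trans HX _ (fun n => fst (p n))).
    + apply (null_met_sym HX), (null_max_l _ _ H).
    + exact (null_max_l _ _ H').
  - intros p H. exists (fun n => fst (p n)).
    apply null_max; [apply (null_met_refl HX)|exact (null_pb_weight _ _ H)].
Qed.

Lemma pb_proj_mor : is_permor pb_rel (srel S) pb_proj.
Proof.
  unfold pb_proj. apply permor_intro.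
  - intros p s; apply Rmax_in01; [apply (per_val HS)|apply pb_weight_val].
  - intros p s H. split; [apply null_pb_rel_refl, (null_max_r _ _ H)|].
    exact (null_per_refl_r HS _ _ (null_max_l _ _ H)).
  - intros p p' s s' H Hp Hs. apply null_max; [|exact (null_max_r _ _ (null_max_r _ _ Hp))].
    apply (null_per_trans HS _ (fun n => snd (p n))).
    + apply (null_per_sym HS), (null_max_r _ _ (null_max_l _ _ Hp)).
    + apply (null_per_trans HS _ s); [exact (null_max_l _ _ H)|exact Hs].
  - intros p s s' H H'. apply (null_per_trans HS _ (fun n => snd (p n))).
    + apply (null_per_sym HS), (null_max_l _ _ H).
    + exact (null_max_l _ _ H').
  - intros p H. exists (fun n => snd (p n)).
    apply null_max; [exact (null_max_r _ _ (null_max_l _ _ H))|exact (null_pb_weight _ _ H)].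
Qed.

Lemma pb_square : pereq (pcomp pb_mono (Gmor dY f)) (pcomp pb_proj (smor S)).
Proof.
  apply sq_seq2; intros p y H; simpl in *.
  destruct (pcomp_elim pb_mono_mor p y H) as [x [H1 H2]]. unfold pb_mono, Gmor in *.
  assert (W := null_max_r _ _ H1).
  apply (pcomp_intro pb_proj_mor p (fun n => snd (p n))).
  - unfold pb_proj. apply null_max; auto. exact (mor_dom Hm _ _ W).
  - apply (mor_ext Hm (fun n => snd (p n)) _ (fun n => f (fst (p n))) y); auto.
    + exact (mor_dom Hm _ _ W).
    + apply (null_met_trans HY _ (fun n => f (x n))); auto.
      apply (unif_cont_null dX dY f); auto. exact (null_max_l _ _ H1).
Qed.

Section Cone.
Context {C : Type} {RC : C -> C -> R} {u : C -> X -> R} {v : C -> sdom S -> R}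
  (Hu : is_permor RC dX u) (Hv : is_permor RC (srel S) v)
  (Huv : pereq (pcomp u (Gmor dY f)) (pcomp v (smor S))).

Lemma cone_weight (c : nat -> C) x s : null (fun n => u (c n) (x n)) -> null (fun n => v (c n) (s n)) ->
  null (fun n => pb_weight (x n, s n)).
Proof.
  intros H1 H2. assert (A : null (fun n => pcomp u (Gmor dY f) (c n) (f (x n)))).
  { apply (pcomp_intro Hu c x); auto. unfold Gmor; apply (null_met_refl HY). }
  apply (pereq_apply _ _ _ _ Huv) in A. destruct (pcomp_elim Hv _ _ A) as [s' [B1 B2]].
  unfold pb_weight; simpl. apply (mor_ext Hm s' s (fun n => f (x n)) (fun n => f (x n))); auto.
  - exact (mor_fun Hv c s' s B1 H2).
  - apply (null_met_refl HY).
Qed.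

Lemma cone_pairing_mor : is_permor RC pb_rel (pairing u v).
Proof.
  unfold pairing. apply permor_intro.
  - intros c p; apply Rmax_in01; [apply (mor_val Hu)|apply (mor_val Hv)].
  - intros c p H. split; [exact (mor_dom Hu _ _ (null_max_l _ _ H))|].
    apply null_pb_rel_refl, (cone_weight c); [exact (null_max_l _ _ H)|exact (null_max_r _ _ H)].
  - intros c c' p p' H Hc Hp. apply null_max.
    + apply (mor_ext Hu c c' (fun n => fst (p n))); auto.
      * exact (null_max_l _ _ H).
      * exact (null_max_l _ _ (null_max_l _ _ Hp)).
    + apply (mor_ext Hv c c' (fun n => snd (p n))); auto.
      * exact (null_max_r _ _ H).
      * exact (null_max_r _ _ (null_max_l _ _ Hp)).
  - intros c p p' H H'. unfold pb_rel. apply null_max; apply null_max.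
    + apply (mor_fun Hu c); [exact (null_max_l _ _ H)|exact (null_max_l _ _ H')].
    + apply (mor_fun Hv c); [exact (null_max_r _ _ H)|exact (null_max_r _ _ H')].
    + apply (cone_weight c (fun n => fst (p n)) (fun n => snd (p n)));
        [exact (null_max_l _ _ H)|exact (null_max_r _ _ H)].
    + apply (cone_weight c (fun n => fst (p' n)) (fun n => snd (p' n)));
        [exact (null_max_l _ _ H')|exact (null_max_r _ _ H')].
  - intros c H. destruct (mor_tot Hu c H) as [x Hx]. destruct (mor_tot Hv c H) as [s Hs].
    exists (fun n => (x n, s n)). apply null_max; auto.
Qed.

Lemma cone_pairing_mono : pereq (pcomp (pairing u v) pb_mono) u.
Proof.
  apply sq_seq2; intros c x H; simpl in *.
  destruct (pcomp_elim cone_pairing_mor c x H) as [p [H1 H2]]. unfold pairing, pb_mono in *.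
  apply (mor_ext Hu c c (fun n => fst (p n))); [exact (null_max_l _ _ H1)| |exact (null_max_l _ _ H2)].
  exact (mor_dom Hu _ _ (null_max_l _ _ H1)).
Qed.

Lemma cone_pairing_proj : pereq (pcomp (pairing u v) pb_proj) v.
Proof.
  apply sq_seq2; intros c s H; simpl in *.
  destruct (pcomp_elim cone_pairing_mor c s H) as [p [H1 H2]]. unfold pairing, pb_proj in *.
  apply (mor_ext Hv c c (fun n => snd (p n))); [exact (null_max_r _ _ H1)| |exact (null_max_l _ _ H2)].
  exact (mor_dom Hv _ _ (null_max_r _ _ H1)).
Qed.
End Cone.

Lemma pb_unique {C : Type} (RC : C -> C -> R) (h h' : C -> X * sdom S -> R) :
  is_permor RC pb_rel h -> is_permor RC pb_rel h' ->
  pereq (pcomp h pb_mono) (pcomp h' pb_mono) -> pereq (pcomp h pb_proj) (pcomp h' pb_proj) ->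
  pereq h h'.
Proof.
  intros Hh Hh' E1 E2. apply sq_seq2; intros c p H; simpl in *.
  assert (W := null_pb_weight _ _ (mor_cod Hh _ _ H)).
  assert (A1 : null (fun n => pcomp h pb_mono (c n) (fst (p n)))).
  { apply (pcomp_intro Hh c p); auto. unfold pb_mono; apply null_max; auto. apply (null_met_refl HX). }
  assert (A2 : null (fun n => pcomp h pb_proj (c n) (snd (p n)))).
  { apply (pcomp_intro Hh c p); auto. unfold pb_proj; apply null_max; auto. exact (mor_dom Hm _ _ W). }
  apply (pereq_apply _ _ _ _ E1) in A1. apply (pereq_apply _ _ _ _ E2) in A2.
  destruct (pcomp_elim Hh' _ _ A1) as [p1 [B1 C1]].
  destruct (pcomp_elim Hh' _ _ A2) as [p2 [B2 C2]].
  unfold pb_mono in C1. unfold pb_proj in C2.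
  assert (D := null_max_l _ _ (mor_fun Hh' c p1 p2 B1 B2)).
  apply (mor_ext Hh' c c p1 p); [exact B1|exact (mor_dom Hh _ _ H)|].
  apply null_max; apply null_max.
  - exact (null_max_l _ _ C1).
  - apply (null_per_trans HS _ (fun n => snd (p2 n))); [exact (null_max_r _ _ D)|exact (null_max_l _ _ C2)].
  - exact (null_pb_weight _ _ (mor_cod Hh' _ _ B1)).
  - exact W.
Qed.

Lemma pb_pullback : is_pullback dX (Gmor dY f) S pb_sub pb_proj.
Proof.
  split; [exact pb_rel_per|split; [exact pb_mono_mor|split; [exact pb_proj_mor|split; [exact pb_square|]]]].
  intros C RC u v _ Hu Hv Huv. split.
  - exists (pairing u v). split; [exact (cone_pairing_mor Hu Hv Huv)|].
    split; [exact (cone_pairing_mono Hu Hv Huv)|exact (cone_pairing_proj Hu Hv Huv)].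
  - apply pb_unique.
Qed.

(* Pulling back along G(f) precomposes supports with f: this holds for every
   pullback P, since the canonical one maps into it. *)
Lemma support_pullback (P : subrep X) (q : sdom P -> sdom S -> R) :
  is_pullback dX (Gmor dY f) S P q ->
  sq (support P) (fun x => support S (f x)) /\ sq (fun x => support S (f x)) (support P).
Proof.
  intros [HPp [HPm [Hq [Hsq Huniv]]]]. split; apply sq_seq; intros x H.
  - destruct (support_elim HPm x H) as [p Hp].
    assert (A : null (fun n => pcomp (smor P) (Gmor dY f) (p n) (f (x n)))).
    { apply (pcomp_intro HPm p x); auto. unfold Gmor; apply (null_met_refl HY). }
    apply (pereq_apply _ _ _ _ Hsq) in A. destruct (pcomp_elim Hq _ _ A) as [s [_ B]].
    exact (support_intro Hm _ s B).
  - destruct (Huniv _ _ _ _ pb_rel_per pb_mono_mor pb_proj_mor pb_square) as [[h [Hh [E _]]] _].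
    assert (E' := pereq_sym _ _ _ _ (met_per dX HX) (pcomp_mor Hh HPm) pb_mono_mor E).
    destruct (support_elim Hm _ H) as [s Hs].
    assert (A : null (fun n => pb_mono (x n, s n) (x n))).
    { unfold pb_mono, pb_weight; simpl. apply null_max; auto. apply (null_met_refl HX). }
    apply (pereq_apply _ _ _ _ E') in A. destruct (pcomp_elim Hh _ _ A) as [p [_ B]].
    exact (support_intro HPm x p B).
Qed.
End Pullback.

(* Pseudonaturality of eta: eta_X(psi o f) is a pullback of eta_Y(psi) along
   G(f), the projection being the factorization of f through eta_Y(psi). *)
Section EtaPullback.
Context {X Y : Type} {dX : X -> X -> R} {dY : Y -> Y -> R} (HX : is_met1 dX) (HY : is_met1 dY)
  {f : X -> Y} (Hf : unif_cont dX dY f) {psi : Y -> R} (Hpsi : CMT dY psi).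

Let thf : X -> R := fun x => psi (f x).
Let q : X -> Y -> R := eta_factor f thf (eta dY psi).

Lemma thf_cmt : CMT dX thf.
Proof. exact (cmt_comp dX dY f psi Hpsi Hf). Qed.

Lemma eta_pb_proj_mor : is_permor (simr dX thf) (simr dY psi) q.
Proof.
  apply (eta_factor_mor HX Hf thf_cmt (S := eta dY psi) (simr_mor HY Hpsi)).
  - exact (per_mono_injective _ _ _ (simr_per HY Hpsi) (simr_mono HY Hpsi)).
  - apply sq_seq; intros x H. exact (sq_apply _ _ (fun n => f (x n)) (proj1 (support_eta dY psi HY Hpsi)) H).
Qed.

Lemma eta_pb_square : pereq (pcomp (simr dX thf) (Gmor dY f)) (pcomp q (simr dY psi)).
Proof.
  apply sq_seq2; intros x y H; simpl in *.
  destruct (pcomp_elim (simr_mor HX thf_cmt) x y H) as [x' [H1 H2]]. unfold Gmor in H2.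
  assert (D : null (fun n => dY (f (x n)) (y n))).
  { apply (null_met_trans HY _ (fun n => f (x' n))); auto.
    apply (unif_cont_null dX dY f); auto. exact (null_simr_r _ _ _ _ H1). }
  assert (T := null_simr_l _ _ _ _ H1).
  apply (pcomp_intro eta_pb_proj_mor x (fun n => f (x n))).
  - unfold q, eta_factor. apply null_max; auto. apply null_simr_intro; auto. apply (null_met_refl HY).
  - apply null_simr_intro; auto.
Qed.

Section Cone.
Context {C : Type} {RC : C -> C -> R} {u : C -> X -> R} {v : C -> Y -> R}
  (Hu : is_permor RC dX u) (Hv : is_permor RC (simr dY psi) v)
  (Huv : pereq (pcomp u (Gmor dY f)) (pcomp v (simr dY psi))).

Lemma eta_cone_over (c : nat -> C) (x : nat -> X) : null (fun n => u (c n) (x n)) ->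
  exists y, null (fun n => v (c n) (y n)) /\ null (fun n => simr dY psi (y n) (f (x n))).
Proof.
  intro H. assert (A : null (fun n => pcomp u (Gmor dY f) (c n) (f (x n)))).
  { apply (pcomp_intro Hu c x); auto. unfold Gmor; apply (null_met_refl HY). }
  apply (pereq_apply _ _ _ _ Huv) in A. exact (pcomp_elim Hv _ _ A).
Qed.

Lemma eta_cone_weight (c : nat -> C) (x : nat -> X) :
  null (fun n => u (c n) (x n)) -> null (fun n => thf (x n)).
Proof.
  intro H. destruct (eta_cone_over c x H) as [y [_ B]].
  apply (cmt_null Hpsi y); [exact (null_simr_r _ _ _ _ B)|exact (null_simr_l _ _ _ _ B)].
Qed.

Lemma eta_cone_mor : is_permor RC (simr dX thf) u.
Proof.
  apply permor_intro; [apply (mor_val Hu)| | | |].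
  - intros c x H. split; [exact (mor_dom Hu _ _ H)|].
    apply null_simr_intro; [exact (eta_cone_weight c x H)|apply (null_met_refl HX)].
  - intros c c' x x' H Hc Hx. apply (mor_ext Hu c c' x x'); auto. exact (null_simr_r _ _ _ _ Hx).
  - intros c x x' H H'. apply null_simr_intro; [exact (eta_cone_weight c x H)|exact (mor_fun Hu c x x' H H')].
  - exact (mor_tot Hu).
Qed.

Lemma eta_cone_mono : pereq (pcomp u (simr dX thf)) u.
Proof.
  apply sq_seq2; intros c x H; simpl in *.
  destruct (pcomp_elim eta_cone_mor c x H) as [x1 [H1 H2]].
  apply (mor_ext Hu c c x1 x); auto. exact (mor_dom Hu _ _ H1). exact (null_simr_r _ _ _ _ H2).
Qed.

Lemma eta_cone_proj : pereq (pcomp u q) v.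
Proof.
  apply sq_seq2; intros c y H; simpl in *.
  destruct (pcomp_elim eta_cone_mor c y H) as [x [H1 H2]].
  unfold q, eta_factor in H2. cbn [eta smor] in H2.
  destruct (eta_cone_over c x H1) as [y' [B1 B2]].
  apply (mor_ext Hv c c y' y); [exact B1|exact (mor_dom Hv _ _ B1)|].
  apply null_simr_intro; [exact (null_simr_l _ _ _ _ B2)|].
  apply (null_met_trans HY _ (fun n => f (x n))); [exact (null_simr_r _ _ _ _ B2)|].
  apply (null_met_sym HY), (null_simr_r _ _ _ _ (null_max_r _ _ H2)).
Qed.
End Cone.

(* eta_X(psi o f) is monic, which gives uniqueness of mediators. *)
Lemma eta_pb_unique {C : Type} (RC : C -> C -> R) (h h' : C -> X -> R) :
  is_permor RC (simr dX thf) h -> is_permor RC (simr dX thf) h' ->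
  pereq (pcomp h (simr dX thf)) (pcomp h' (simr dX thf)) -> pereq h h'.
Proof.
  intros Hh Hh' E. apply sq_seq2; intros c x H; simpl in *.
  assert (B : null (fun n => pcomp h (simr dX thf) (c n) (x n)))
    by (apply (pcomp_intro Hh c x); auto; exact (mor_cod Hh _ _ H)).
  apply (pereq_apply _ _ _ _ E) in B.
  destruct (pcomp_elim Hh' _ _ B) as [x1 [B1 B2]].
  apply (mor_ext Hh' c c x1 x); [exact B1|exact (mor_dom Hh _ _ H)|exact B2].
Qed.

Lemma eta_pullback : is_pullback dX (Gmor dY f) (eta dY psi) (eta dX thf) q.
Proof.
  cbn [eta sdom srel smor].
  split; [exact (simr_per HX thf_cmt)|split; [exact (simr_mor HX thf_cmt)|]].
  split; [exact eta_pb_proj_mor|split; [exact eta_pb_square|]].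
  intros C RC u v _ Hu Hv Huv. split.
  - exists u. split; [exact (eta_cone_mor Hu Hv Huv)|].
    split; [exact (eta_cone_mono Hu Hv Huv)|exact (eta_cone_proj Hu Hv Huv)].
  - intros h h' Hh Hh' E _. exact (eta_pb_unique RC h h' Hh Hh' E).
Qed.
End EtaPullback.

(* eta(th) lies below every pullback P of S along G(f) as soon as th ⊑ (support S) o f:
   the factorization eta_factor completes eta(th) to a commuting cone. *)
Lemma eta_below_pullback {Z X : Type} (dZ : Z -> Z -> R) (d : X -> X -> R) (f : Z -> X)
  (th : Z -> R) (S : subrep X) (P : subrep Z) (q : sdom P -> sdom S -> R) :
  is_met1 dZ -> is_met1 d -> unif_cont dZ d f -> CMT dZ th -> is_subobj d S ->
  is_pullback dZ (Gmor d f) S P q -> sq th (fun z => support S (f z)) -> sub_le (eta dZ th) P.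
Proof.
  intros HZ Hd Hf Hth [HSp HSm] HP Hle.
  assert (Hm : is_permor (srel S) d (smor S)) by apply HSm.
  assert (Hinj := per_mono_injective _ _ _ HSp HSm).
  assert (Hu := simr_mor HZ Hth). assert (Hv := eta_factor_mor HZ Hf Hth Hm Hinj Hle).
  assert (Huv : pereq (pcomp (simr dZ th) (Gmor d f)) (pcomp (eta_factor f th S) (smor S))).
  { apply sq_seq2; intros z x Hn; simpl in *.
    destruct (pcomp_elim Hu z x Hn) as [z' [H1 H2]]. unfold Gmor in H2.
    assert (Hz := null_simr_l _ _ _ _ H1).
    assert (Dx : null (fun n => d (f (z n)) (x n))).
    { apply (null_met_trans Hd _ (fun n => f (z' n))); auto.
      apply (unif_cont_null dZ d f); auto. exact (null_simr_r _ _ _ _ H1). }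
    destruct (support_elim Hm _ (sq_apply _ _ z Hle Hz)) as [s Hs].
    apply (pcomp_intro Hv z s); [unfold eta_factor; apply null_max; auto|].
    apply (mor_ext Hm s s (fun n => f (z n))); auto. exact (mor_dom Hm _ _ Hs). }
  destruct HP as [_ [_ [_ [_ Huniv]]]].
  destruct (Huniv _ _ _ _ (simr_per HZ Hth) Hu Hv Huv) as [[h [Hh [E _]]] _].
  exists h. split; auto.
Qed.

(* In U, fibrewise inf and sup are left and right adjoint to reindexing
   along the projection X x Y -> X. *)
Lemma sq_inf_fibre {X Y : Type} (phi : X * Y -> R) (a : X -> R) : (forall z, 0 <= phi z) ->
  (sq (fun x => inf01 (fun y => phi (x, y))) a <-> sq phi (fun z => a (fst z))).
Proof.
  intros H0. split; intro H; apply sq_seq.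
  - intros z Hz. apply (sq_apply _ _ (fun n => fst (z n)) H).
    apply (null_inf_intro (fun n y => phi (fst (z n), y)) (fun n => snd (z n))); [intros; apply H0|].
    simpl. eapply null_le; [|exact Hz]. intro n; rewrite <- surjective_pairing; lra.
  - intros x Hx. destruct (null_inf_elim (fun n y => phi (x n, y)) (fun n y => H0 _) Hx) as [y Hy].
    exact (sq_apply _ _ (fun n => (x n, y n)) H Hy).
Qed.

Lemma sq_sup_fibre {X Y : Type} (phi : X * Y -> R) (a : X -> R) : (forall z, phi z <= 1) ->
  (sq a (fun x => sup01 (fun y => phi (x, y))) <-> sq (fun z => a (fst z)) phi).
Proof.
  intros H1. split; intro H.
  - apply sq_seq; intros z Hz. assert (A := sq_apply _ _ (fun n => fst (z n)) H Hz).
    eapply null_le; [|exact A]. intro n; simpl.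
    rewrite (surjective_pairing (z n)) at 1. apply (sup01_ge (fun y => phi (fst (z n), y))); auto.
  - intros e He. destruct (H e He) as [del [Hdel Hb]]. exists del; split; auto.
    intros x Hx. apply sup01_lub; [intro; apply H1|lra|]. intro y. exact (Hb (x, y) Hx).
Qed.

(* Preservation of the quantifiers: eta_X(inf_Y phi) and eta_X(sup_Y phi)
   are the values at eta(phi) of the left and right adjoints to pullback
   along G(fst), because supports of pullbacks are precomposed supports. *)
Lemma eta_exists {X Y : Type} (dX : X -> X -> R) (dY : Y -> Y -> R) (phi : X * Y -> R) :
  is_met1 dX -> is_met1 dY -> CMT (dprod dX dY) phi ->
  forall (S : subrep X) (P : subrep (X * Y)) (q : sdom P -> sdom S -> R),
  is_subobj dX S -> is_pullback (dprod dX dY) (Gmor dX (@fst X Y)) S P q ->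
  (sub_le (eta (dprod dX dY) phi) P <-> sub_le (eta dX (fun x => inf01 (fun y : Y => phi (x, y)))) S).
Proof.
  intros HX HY Hphi S P q HS HP.
  assert (Hd := dprod_met HX HY). assert (Hfst := unif_cont_fst (dX := dX) (dY := dY)).
  assert (HPm : is_permor (srel P) (dprod dX dY) (smor P)) by apply HP.
  pose proof HS as [HSp [HSm _]].
  destruct (support_pullback Hd HX Hfst HSp HSm P q HP) as [E _].
  rewrite (eta_below_iff _ _ S HX (cmt_inf dX dY phi HY Hphi) HS), sq_inf_fibre by apply (cmt_val Hphi).
  split; intro H.
  - exact (sq_trans _ _ _ (sq_of_eta_below _ _ _ Hd Hphi HPm H) E).
  - exact (eta_below_pullback _ _ fst phi S P q Hd HX Hfst Hphi HS HP H).
Qed.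

Lemma eta_forall {X Y : Type} (dX : X -> X -> R) (dY : Y -> Y -> R) (phi : X * Y -> R) :
  is_met1 dX -> is_met1 dY -> CMT (dprod dX dY) phi ->
  forall (S : subrep X) (P : subrep (X * Y)) (q : sdom P -> sdom S -> R),
  is_subobj dX S -> is_pullback (dprod dX dY) (Gmor dX (@fst X Y)) S P q ->
  (sub_le P (eta (dprod dX dY) phi) <-> sub_le S (eta dX (fun x => sup01 (fun y : Y => phi (x, y))))).
Proof.
  intros HX HY Hphi S P q [HSp [HSm _]] HP. assert (Hd := dprod_met HX HY).
  assert (HPm : is_permor (srel P) (dprod dX dY) (smor P)) by apply HP.
  destruct (support_pullback Hd HX unif_cont_fst HSp HSm P q HP) as [E1 E2].
  rewrite (eta_above_iff _ _ P Hd Hphi HPm), (eta_above_iff _ _ S HX (cmt_sup dX dY phi HY Hphi) HSm).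
  rewrite sq_sup_fibre by apply (cmt_val Hphi).
  split; intro H; eapply sq_trans; eauto.
Qed.

Lemma eta_top {X : Type} (d : X -> X -> R) (S : subrep X) :
  is_met1 d -> is_subobj d S -> sub_le S (eta d (fun _ => 0)).
Proof.
  intros Hd [_ [Hm _]]. apply (eta_above_iff _ _ S Hd (cmt_const d 0 ltac:(lra)) Hm).
  apply sq_seq; intros; apply null_nonpos; intro; lra.
Qed.

Lemma eta_meet {X : Type} (d : X -> X -> R) (phi psi : X -> R) :
  is_met1 d -> CMT d phi -> CMT d psi ->
  sub_le (eta d (fun x => Rmax (phi x) (psi x))) (eta d phi) /\
  sub_le (eta d (fun x => Rmax (phi x) (psi x))) (eta d psi) /\
  forall S : subrep X, is_subobj d S ->
    sub_le S (eta d phi) -> sub_le S (eta d psi) -> sub_le S (eta d (fun x => Rmax (phi x) (psi x))).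
Proof.
  intros Hd Hphi Hpsi. assert (Hmax := cmt_max d phi psi Hphi Hpsi).
  split; [apply eta_le; auto; apply sq_pointwise; intro; apply Rmax_l|].
  split; [apply eta_le; auto; apply sq_pointwise; intro; apply Rmax_r|].
  intros S [_ [Hm _]]. rewrite !(eta_above_iff _ _ S Hd); auto. apply sq_max.
Qed.

Lemma eta_bottom {X : Type} (d : X -> X -> R) (S : subrep X) :
  is_met1 d -> is_subobj d S -> sub_le (eta d (fun _ => 1)) S.
Proof.
  intros Hd HS. apply (eta_below_iff _ _ S Hd (cmt_const d 1 ltac:(lra)) HS).
  apply sq_seq; intros z Hz. exfalso; exact (not_null_one Hz).
Qed.

Lemma eta_join {X : Type} (d : X -> X -> R) (phi psi : X -> R) :
  is_met1 d -> CMT d phi -> CMT d psi ->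
  sub_le (eta d phi) (eta d (fun x => Rmin (phi x) (psi x))) /\
  sub_le (eta d psi) (eta d (fun x => Rmin (phi x) (psi x))) /\
  forall S : subrep X, is_subobj d S ->
    sub_le (eta d phi) S -> sub_le (eta d psi) S -> sub_le (eta d (fun x => Rmin (phi x) (psi x))) S.
Proof.
  intros Hd Hphi Hpsi. assert (Hmin := cmt_min d phi psi Hphi Hpsi).
  split; [apply eta_le; auto; apply sq_pointwise; intro; apply Rmin_l|].
  split; [apply eta_le; auto; apply sq_pointwise; intro; apply Rmin_r|].
  intros S HS. rewrite !(eta_below_iff _ _ S Hd); auto. apply sq_min.
Qed.

Lemma eta_equality {X : Type} (d : X -> X -> R) :
  is_met1 d ->
  sub_le (eta (dprod d d) (fun p => d (fst p) (snd p))) (diag_sub d) /\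
  sub_le (diag_sub d) (eta (dprod d d) (fun p => d (fst p) (snd p))).
Proof.
  intros Hd. assert (Hdd := dprod_met Hd Hd). assert (Hth := cmt_dist d Hd).
  assert (Dm : is_permor (srel (diag_sub d)) (dprod d d) (smor (diag_sub d))).
  { apply Gmor_mor; auto. apply unif_cont_of_sq, sq_seq2; intros x y H. apply null_dprod_intro; auto. }
  split.
  - apply (eta_below_of_sq _ _ _ Hdd Hth Dm).
    + apply sq_seq3; intros x x' z H; simpl in *. unfold Gmor, dprod in H; simpl in H.
      apply (null_met_trans Hd _ (fun n => fst (z n))); [exact (null_max_l _ _ (null_max_l _ _ H))|].
      apply (null_met_sym Hd), (null_max_l _ _ (null_max_r _ _ H)).
    + apply sq_seq; intros z H. apply (support_intro Dm z (fun n => fst (z n))).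
      cbn [diag_sub smor]. unfold Gmor, dprod; simpl. apply null_max; auto. apply (null_met_refl Hd).
  - apply (eta_above_iff _ _ _ Hdd Hth Dm).
    apply sq_seq; intros z H. destruct (support_elim Dm z H) as [x Hx].
    cbn [diag_sub smor] in Hx. unfold Gmor, dprod in Hx; simpl in Hx.
    apply (null_met_trans Hd _ x); [apply (null_met_sym Hd), (null_max_l _ _ Hx)|exact (null_max_r _ _ Hx)].
Qed.

Theorem mainTheorem18 :
  (* --- G is a functor cMet_1 -> PER(U) --- *)
  (forall (X : Type) (dX : X -> X -> R), is_cmet1 dX -> is_per dX) /\
  (forall (X Y : Type) (dX : X -> X -> R) (dY : Y -> Y -> R) (f : X -> Y),
     is_cmet1 dX -> is_cmet1 dY -> unif_cont dX dY f -> is_permor dX dY (Gmor dY f)) /\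
  (forall (X : Type) (dX : X -> X -> R), is_cmet1 dX ->
     pereq (Gmor dX (fun x : X => x)) dX) /\
  (forall (X Y Z : Type) (dX : X -> X -> R) (dY : Y -> Y -> R) (dZ : Z -> Z -> R)
     (f : X -> Y) (g : Y -> Z),
     is_cmet1 dX -> is_cmet1 dY -> is_cmet1 dZ -> unif_cont dX dY f -> unif_cont dY dZ g ->
     pereq (Gmor dZ (fun x => g (f x))) (pcomp (Gmor dY f) (Gmor dZ g))) /\
  (* --- G is full and faithful --- *)
  (forall (X Y : Type) (dX : X -> X -> R) (dY : Y -> Y -> R) (F : X -> Y -> R),
     is_cmet1 dX -> is_cmet1 dY -> is_permor dX dY F ->
     exists f : X -> Y, unif_cont dX dY f /\ pereq (Gmor dY f) F) /\
  (forall (X Y : Type) (dX : X -> X -> R) (dY : Y -> Y -> R) (f g : X -> Y),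
     is_cmet1 dX -> is_cmet1 dY -> unif_cont dX dY f -> unif_cont dX dY g ->
     pereq (Gmor dY f) (Gmor dY g) -> f = g) /\
  (* --- G preserves finite products --- *)
  is_per_terminal dunit /\
  (forall (X Y : Type) (dX : X -> X -> R) (dY : Y -> Y -> R),
     is_cmet1 dX -> is_cmet1 dY ->
     is_per_product (dprod dX dY) dX dY
       (Gmor dX (@fst X Y)) (Gmor dY (@snd X Y))) /\
  (* --- pullbacks along G-morphisms exist in PER(U) (reindexing of Sub) --- *)
  (forall (X Y : Type) (dX : X -> X -> R) (dY : Y -> Y -> R) (f : X -> Y) (S : subrep Y),
     is_cmet1 dX -> is_cmet1 dY -> unif_cont dX dY f -> is_subobj dY S ->
     exists (P : subrep X) (q : sdom P -> sdom S -> R), is_pullback dX (Gmor dY f) S P q) /\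
  (* --- eta_(X,d) lands in Sub(G(X,d)) and reflects (and preserves) the order --- *)
  (forall (X : Type) (dX : X -> X -> R) (phi : X -> R),
     is_cmet1 dX -> CMT dX phi -> is_subobj dX (eta dX phi)) /\
  (forall (X : Type) (dX : X -> X -> R) (phi psi : X -> R),
     is_cmet1 dX -> CMT dX phi -> CMT dX psi ->
     (sq phi psi <-> sub_le (eta dX phi) (eta dX psi))) /\
  (* --- eta is pseudonatural: eta_X(psi o f) = (G f)^*(eta_Y psi) --- *)
  (forall (X Y : Type) (dX : X -> X -> R) (dY : Y -> Y -> R) (f : X -> Y) (psi : Y -> R),
     is_cmet1 dX -> is_cmet1 dY -> unif_cont dX dY f -> CMT dY psi ->
     exists q : X -> Y -> R,
       is_pullback dX (Gmor dY f) (eta dY psi) (eta dX (fun x => psi (f x))) q) /\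
  (* --- preservation of top and binary meets (top = 0, meet = max) --- *)
  (forall (X : Type) (dX : X -> X -> R) (S : subrep X),
     is_cmet1 dX -> is_subobj dX S -> sub_le S (eta dX (fun _ => 0))) /\
  (forall (X : Type) (dX : X -> X -> R) (phi psi : X -> R),
     is_cmet1 dX -> CMT dX phi -> CMT dX psi ->
     sub_le (eta dX (fun x => Rmax (phi x) (psi x))) (eta dX phi) /\
     sub_le (eta dX (fun x => Rmax (phi x) (psi x))) (eta dX psi) /\
     forall S : subrep X, is_subobj dX S ->
       sub_le S (eta dX phi) -> sub_le S (eta dX psi) ->
       sub_le S (eta dX (fun x => Rmax (phi x) (psi x)))) /\
  (* --- preservation of bottom and binary joins (bottom = 1, join = min) --- *)
  (forall (X : Type) (dX : X -> X -> R) (S : subrep X),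
     is_cmet1 dX -> is_subobj dX S -> sub_le (eta dX (fun _ => 1)) S) /\
  (forall (X : Type) (dX : X -> X -> R) (phi psi : X -> R),
     is_cmet1 dX -> CMT dX phi -> CMT dX psi ->
     sub_le (eta dX phi) (eta dX (fun x => Rmin (phi x) (psi x))) /\
     sub_le (eta dX psi) (eta dX (fun x => Rmin (phi x) (psi x))) /\
     forall S : subrep X, is_subobj dX S ->
       sub_le (eta dX phi) S -> sub_le (eta dX psi) S ->
       sub_le (eta dX (fun x => Rmin (phi x) (psi x))) S) /\
  (* --- preservation of exists along projections (exists = inf over fibres):
         eta_X(exists phi) is the value at eta(phi) of the left adjoint
         to pullback along G(pi) --- *)
  (forall (X Y : Type) (dX : X -> X -> R) (dY : Y -> Y -> R) (phi : X * Y -> R),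
     is_cmet1 dX -> is_cmet1 dY -> CMT (dprod dX dY) phi ->
     forall (S : subrep X) (P : subrep (X * Y)) (q : sdom P -> sdom S -> R),
       is_subobj dX S -> is_pullback (dprod dX dY) (Gmor dX (@fst X Y)) S P q ->
       (sub_le (eta (dprod dX dY) phi) P <->
        sub_le (eta dX (fun x => inf01 (fun y : Y => phi (x, y)))) S)) /\
  (* --- preservation of forall along projections (forall = sup over fibres):
         eta_X(forall phi) is the value at eta(phi) of the right adjoint
         to pullback along G(pi) --- *)
  (forall (X Y : Type) (dX : X -> X -> R) (dY : Y -> Y -> R) (phi : X * Y -> R),
     is_cmet1 dX -> is_cmet1 dY -> CMT (dprod dX dY) phi ->
     forall (S : subrep X) (P : subrep (X * Y)) (q : sdom P -> sdom S -> R),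
       is_subobj dX S -> is_pullback (dprod dX dY) (Gmor dX (@fst X Y)) S P q ->
       (sub_le P (eta (dprod dX dY) phi) <->
        sub_le S (eta dX (fun x => sup01 (fun y : Y => phi (x, y)))))) /\
  (* --- preservation of equality: eta_(X x X)(d) is the diagonal subobject --- *)
  (forall (X : Type) (dX : X -> X -> R),
     is_cmet1 dX ->
     sub_le (eta (dprod dX dX) (fun p => dX (fst p) (snd p))) (diag_sub dX) /\
     sub_le (diag_sub dX) (eta (dprod dX dX) (fun p => dX (fst p) (snd p)))).
Proof.
  split; [intros X dX [HX _]; exact (met_per dX HX)|].
  split; [intros X Y dX dY f [HX _] [HY _] Hf; exact (Gmor_mor dX dY f HX HY Hf)|].
  split; [intros X dX _; apply G_id|].
  split; [intros X Y Z dX dY dZ f g _ [HY _] _ _ _; exact (G_comp dY dZ f g HY)|].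
  split; [intros; apply G_full; auto|].
  split; [intros X Y dX dY f g _ [HY _] _ _; exact (G_faithful dY f g HY)|].
  split; [exact dunit_terminal|].
  split; [intros X Y dX dY [HX _] [HY _]; exact (dprod_product HX HY)|].
  split; [intros X Y dX dY f S [HX _] [HY _] Hf [HSp [HSm _]]; do 2 eexists;
          exact (pb_pullback HX HY Hf HSp HSm)|].
  split; [intros X dX phi [HX _] Hphi; exact (eta_subobj HX Hphi)|].
  split; [intros X dX phi psi [HX _]; apply eta_le; exact HX|].
  split; [intros X Y dX dY f psi [HX _] [HY _] Hf Hpsi; eexists; exact (eta_pullback HX HY Hf Hpsi)|].
  split; [intros X dX S [HX _]; apply eta_top; exact HX|].
  split; [intros X dX phi psi [HX _]; apply eta_meet; exact HX|].
  split; [intros X dX S [HX _]; apply eta_bottom; exact HX|].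
  split; [intros X dX phi psi [HX _]; apply eta_join; exact HX|].
  split; [intros X Y dX dY phi [HX _] [HY _]; apply eta_exists; auto|].
  split; [intros X Y dX dY phi [HX _] [HY _]; apply eta_forall; auto|].
  intros X dX [HX _]; exact (eta_equality dX HX).
Qed.
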